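(* Let $(X,T)$ be a topological dynamical system, $(x,y)\in X^2$, and $\Delta_X=\{(z,z):z\in X\}$. Let $Z=\overline{\{(T^nx,T^ny):n\in\mathbb{Z}_+\}}\subset X^2$. The following are equivalent: (1) $(x,y)$ is Banach proximal; (2) $\operatorname{supp}(Z,T\times T)\subset\Delta_X$; (3) $Z\subset BP(X,T)$.
   Context: A topological dynamical system $(X,T)$ consists of a non-empty compact metric space $(X,d)$ and a continuous map $T:X\to X$. A set $F\subset\mathbb{Z}_+$ has Banach density one if for every $\lambda<1$ there is $N\ge1$ with $\#(F\cap I)\ge\lambda\,\#(I)$ for every interval of integers $I\subset\mathbb{Z}_+$ with $\#(I)\ge N$. A pair $(x,y)$ is Banach proximal if for every $\varepsilon>0$ the set $\{n\in\mathbb{Z}_+: d(T^nx,T^ny)<\varepsilon\}$ has Banach density one; $BP(X,T)$ is the set of Banach proximal pairs. For a system $(Y,S)$, $M(Y,S)$ is the set of $S$-invariant Borel probability measures and $\operatorname{supp}(Y,S)$ is the smallest closed set $C\subset Y$ with $\mu(C)=1$ for all $\mu\in M(Y,S)$. *)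

From Stdlib Require Import Reals List.
Open Scope R_scope.

Section Generic.
Variable Y : Type.
Variable d : Y -> Y -> R.

Definition is_metric : Prop :=
  (forall x y, 0 <= d x y) /\ (forall x y, d x y = 0 <-> x = y) /\
  (forall x y, d x y = d y x) /\ (forall x y z, d x z <= d x y + d y z).

Definition open_set (A : Y -> Prop) : Prop :=
  forall y, A y -> exists eps, 0 < eps /\ forall z, d y z < eps -> A z.

Definition closed_set (A : Y -> Prop) : Prop := open_set (fun y => ~ A y).

Definition compact_space : Prop :=
  forall (I : Type) (U : I -> Y -> Prop),
    (forall i, open_set (U i)) -> (forall y, exists i, U i y) ->
    exists l : list I, forall y, exists i, In i l /\ U i y.

Definition continuous_map (T : Y -> Y) : Prop :=
  forall x eps, 0 < eps -> exists delta, 0 < delta /\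
    forall y, d x y < delta -> d (T x) (T y) < eps.

Inductive borel : (Y -> Prop) -> Prop :=
| borel_open : forall A, open_set A -> borel A
| borel_compl : forall A, borel A -> borel (fun y => ~ A y)
| borel_union : forall A : nat -> Y -> Prop, (forall n, borel (A n)) ->
    borel (fun y => exists n, A n y)
| borel_ext : forall A B, borel A -> (forall y, A y <-> B y) -> borel B.

(* Borel probability measure (values on non-Borel sets are irrelevant) *)
Definition prob_measure (mu : (Y -> Prop) -> R) : Prop :=
  mu (fun _ => True) = 1 /\
  (forall A, borel A -> 0 <= mu A) /\
  (forall A : nat -> Y -> Prop, (forall n, borel (A n)) ->
     (forall m n y, m <> n -> A m y -> A n y -> False) ->
     Un_cv (fun N => sum_f_R0 (fun n => mu (A n)) N) (mu (fun y => exists n, A n y))).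

(* invariance w.r.t. the preimage operator [pre] of the dynamics *)
Definition invariant_measure (pre : (Y -> Prop) -> (Y -> Prop))
  (mu : (Y -> Prop) -> R) : Prop :=
  prob_measure mu /\ forall A, borel A -> mu (pre A) = mu A.

(* supp(Y,S): the smallest closed set of full measure for every invariant
   measure, realized as the intersection of all such closed sets. *)
Definition supp (pre : (Y -> Prop) -> (Y -> Prop)) (y : Y) : Prop :=
  forall C, closed_set C ->
    (forall mu, invariant_measure pre mu -> mu C = 1) -> C y.
End Generic.

Definition TDS (X : Type) (d : X -> X -> R) (T : X -> X) : Prop :=
  inhabited X /\ is_metric X d /\ compact_space X d /\ continuous_map X d T.

Fixpoint iterate {X : Type} (T : X -> X) (n : nat) (x : X) : X :=
  match n with O => x | S k => T (iterate T k x) end.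

Definition count_in (F : nat -> bool) (a n : nat) : nat :=
  length (filter F (seq a n)).

Definition banach_density_one (F : nat -> bool) : Prop :=
  forall lam, lam < 1 -> exists N, (1 <= N)%nat /\
    forall a n, (N <= n)%nat -> lam * INR n <= INR (count_in F a n).

Definition banach_proximal {X : Type} (d : X -> X -> R) (T : X -> X) (x y : X) : Prop :=
  forall eps, 0 < eps -> banach_density_one
    (fun n => if Rlt_dec (d (iterate T n x) (iterate T n y)) eps then true else false).

Definition d2 {X : Type} (d : X -> X -> R) (p q : X * X) : R :=
  Rmax (d (fst p) (fst q)) (d (snd p) (snd q)).

Definition TT {X : Type} (T : X -> X) (p : X * X) : X * X := (T (fst p), T (snd p)).

Definition orbit_closure {X : Type} (d : X -> X -> R) (T : X -> X) (x y : X) (p : X * X) : Prop :=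
  forall eps, 0 < eps -> exists n, d2 d p (iterate T n x, iterate T n y) < eps.

Definition Zsub {X : Type} (d : X -> X -> R) (T : X -> X) (x y : X) : Type :=
  { p : X * X | orbit_closure d T x y p }.

Definition dZ {X : Type} (d : X -> X -> R) (T : X -> X) (x y : X)
  (u v : Zsub d T x y) : R := d2 d (proj1_sig u) (proj1_sig v).

Definition preZ {X : Type} (d : X -> X -> R) (T : X -> X) (x y : X)
  (A : Zsub d T x y -> Prop) (z : Zsub d T x y) : Prop :=
  exists w : Zsub d T x y, proj1_sig w = TT T (proj1_sig z) /\ A w.

From Pilot Require Import Defs.
From Stdlib Require Import Reals List Lra Lia.
From Stdlib Require Import Classical ClassicalEpsilon ProofIrrelevance FunctionalExtensionality PropExtensionality.
From mathcomp Require ssreflect ssrbool ssrnat classical_sets filter.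
Open Scope R_scope.

(** Let [Z] be the closure of the orbit of [(x, y)] under [T x T] and [gap]
    the distance between the two coordinates of a point of [Z].

    - (1) -> (3): Banach density one is uniform over [Z]: a window of the
      orbit of [p ∈ Z] is shadowed, by continuity, by a window of the orbit of
      [(x, y)] ([banach_proximal_uniform]); (3) -> (1) takes [p = (x, y)].
    - (1) -> (2): for an invariant measure [mu] on [Z] and [e > 0], the
      preimages of [{gap > e}] under [(T x T)^n], [n < N], have equal measure,
      while every point lies in few of them; a layer-cake bound gives
      [mu {gap > e} = 0], so the support avoids [{gap > e}].
    - (2) -> (1): if [(x, y)] is not Banach proximal, long windows with a low
      frequency of [e]-close times exist.  Ultralimits of the window
      frequencies define a finitely additive invariant probability on [Z],
      which a Riesz-type regularisation on the compact metric space [Z] turns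
      into an invariant Borel probability charging the closed set
      [{gap >= e}]; that set then meets the support, contradicting (2). *)

Lemma set_ext {Y : Type} (A B : Y -> Prop) : (forall y, A y <-> B y) -> A = B.
Proof.
  intro H; apply functional_extensionality; intro y.
  apply propositional_extensionality; auto.
Qed.

(** Least upper bound of a set of reals (0 if it is empty or unbounded). *)
Definition Sup (E : R -> Prop) : R :=
  match excluded_middle_informative (bound E /\ exists r, E r) with
  | left h => proj1_sig (completeness E (proj1 h) (proj2 h))
  | right _ => 0
  end.

Lemma Sup_ub E r : bound E -> E r -> r <= Sup E.
Proof.
  intros hb hr. unfold Sup. destruct excluded_middle_informative as [h|h].
  - destruct (completeness E _ _) as [m [Hub Hleast]]; simpl. apply Hub; auto.
  - exfalso; apply h; split; eauto.
Qed.

Lemma Sup_least E m : (exists r, E r) -> (forall r, E r -> r <= m) -> Sup E <= m.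
Proof.
  intros hr hm. unfold Sup. destruct excluded_middle_informative as [h|h].
  - destruct (completeness E _ _) as [s [Hub Hleast]]; simpl. apply Hleast; intros r Hr; auto.
  - exfalso; apply h; split; auto. exists m; intros r Hr; auto.
Qed.

Lemma Sup_approx E eps : (exists r, E r) -> bound E -> 0 < eps ->
  exists r, E r /\ Sup E - eps < r.
Proof.
  intros hr hb he. apply NNPP; intro hn.
  assert (Sup E <= Sup E - eps); [|lra].
  apply Sup_least; auto. intros r Hr.
  destruct (Rle_dec r (Sup E - eps)); auto.
  exfalso; apply hn; exists r; split; auto; lra.
Qed.

Definition Inf (E : R -> Prop) : R := - Sup (fun r => E (- r)).

Lemma Inf_lb E r : (exists m, forall s, E s -> m <= s) -> E r -> Inf E <= r.
Proof.
  intros [m hm] hr. unfold Inf.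
  assert (- r <= Sup (fun r => E (- r))); [|lra].
  apply Sup_ub.
  - exists (- m). intros s Hs. specialize (hm _ Hs). lra.
  - rewrite Ropp_involutive; auto.
Qed.

Lemma Inf_greatest E m : (exists r, E r) -> (forall r, E r -> m <= r) -> m <= Inf E.
Proof.
  intros [r hr] hm. unfold Inf.
  assert (Sup (fun r => E (- r)) <= - m); [|lra].
  apply Sup_least.
  - exists (- r). rewrite Ropp_involutive; auto.
  - intros s Hs. specialize (hm _ Hs). lra.
Qed.

Lemma Inf_approx E eps : (exists r, E r) -> (exists m, forall s, E s -> m <= s) -> 0 < eps ->
  exists r, E r /\ r < Inf E + eps.
Proof.
  intros hr hb he. apply NNPP; intro hn.
  assert (Inf E + eps <= Inf E); [|lra].
  apply Inf_greatest; auto. intros r Hr.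
  destruct (Rle_dec (Inf E + eps) r); auto.
  exfalso; apply hn; exists r; split; auto; lra.
Qed.

Fixpoint fsum (f : nat -> R) (n : nat) : R :=
  match n with O => 0 | S k => fsum f k + f k end.

Lemma fsum_le f g n : (forall i, (i < n)%nat -> f i <= g i) -> fsum f n <= fsum g n.
Proof.
  induction n as [|n IH]; simpl; intro H; [lra|].
  assert (f n <= g n) by (apply H; lia).
  assert (fsum f n <= fsum g n) by (apply IH; intros; apply H; lia). lra.
Qed.

Lemma fsum_ext f g n : (forall i, (i < n)%nat -> f i = g i) -> fsum f n = fsum g n.
Proof.
  induction n as [|n IH]; simpl; intro H; auto.
  rewrite IH, H; auto; intros; apply H; lia.
Qed.

Lemma fsum_plus f g n : fsum (fun i => f i + g i) n = fsum f n + fsum g n.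
Proof. induction n; simpl; lra. Qed.

Lemma fsum_scal c f n : fsum (fun i => c * f i) n = c * fsum f n.
Proof. induction n as [|n IH]; simpl; [lra|]. rewrite IH; lra. Qed.

Lemma fsum_const c n : fsum (fun _ => c) n = INR n * c.
Proof. induction n as [|n IH]; simpl fsum; [simpl; lra|]. rewrite IH, S_INR; lra. Qed.

Lemma fsum_mono f n m : (forall i, 0 <= f i) -> (n <= m)%nat -> fsum f n <= fsum f m.
Proof. intros H Hle; induction Hle; [lra|]. simpl; specialize (H m); lra. Qed.

Lemma fsum_telescope (g : nat -> R) n : fsum (fun j => g j - g (S j)) n = g O - g n.
Proof. induction n as [|n IH]; simpl; [lra|]. rewrite IH; lra. Qed.

Lemma fsum_geometric n : fsum (fun i => / 2 ^ (S i)) n = 1 - / 2 ^ n.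
Proof.
  induction n as [|n IH]; [simpl; lra|].
  change (fsum (fun i => / 2 ^ S i) (S n)) with (fsum (fun i => / 2 ^ S i) n + / 2 ^ S n).
  rewrite IH. assert (0 < 2 ^ n) by (apply pow_lt; lra). simpl. field. lra.
Qed.

Lemma sum_f_R0_fsum f N : sum_f_R0 f N = fsum f (S N).
Proof. induction N as [|N IH]; simpl; [lra|]. rewrite IH; simpl; lra. Qed.

(** [ccount P a n] counts the [i] in the window [a, a+n) satisfying the
    (undecidable) predicate [P]; Banach densities are ratios of such counts. *)
Definition ind (P : Prop) : nat := if excluded_middle_informative P then 1%nat else 0%nat.

Fixpoint ccount (P : nat -> Prop) (a n : nat) : nat :=
  match n with O => O | S k => (ccount P a k + ind (P (a + k)%nat))%nat end.

Lemma ind_le P : (ind P <= 1)%nat.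
Proof. unfold ind; destruct excluded_middle_informative; lia. Qed.

Lemma ccount_le P a n : (ccount P a n <= n)%nat.
Proof. induction n; simpl; auto. pose proof (ind_le (P (a + n)%nat)). lia. Qed.

Lemma ccount_true a n : ccount (fun _ => True) a n = n.
Proof.
  induction n; simpl; auto.
  unfold ind; destruct excluded_middle_informative; try tauto; lia.
Qed.

Lemma ccount_or P Q a n : (forall i, P i -> Q i -> False) ->
  ccount (fun i => P i \/ Q i) a n = (ccount P a n + ccount Q a n)%nat.
Proof.
  intro H; induction n; simpl; auto. rewrite IHn. unfold ind.
  repeat destruct excluded_middle_informative; try tauto; try lia. exfalso; eauto.
Qed.

Lemma ccount_disjoint P Q a n : (forall i, P i -> Q i -> False) ->
  (ccount P a n + ccount Q a n <= n)%nat.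
Proof. intro H. rewrite <- ccount_or by auto. apply ccount_le. Qed.

Lemma ccount_compl P a n : (ccount P a n + ccount (fun i => ~ P i) a n)%nat = n.
Proof.
  rewrite <- ccount_or by auto. rewrite <- (ccount_true a n) at 2.
  f_equal. apply set_ext; intro i; split; auto; intros _; apply classic.
Qed.

Lemma ccount_mono P Q a b n : (forall i, (i < n)%nat -> P (b + i)%nat -> Q (a + i)%nat) ->
  (ccount P b n <= ccount Q a n)%nat.
Proof.
  induction n as [|n IH]; simpl; intro H; auto.
  assert (ccount P b n <= ccount Q a n)%nat by (apply IH; intros; apply H; auto; lia).
  unfold ind; repeat destruct excluded_middle_informative; try lia.
  exfalso; auto.
Qed.

Lemma ccount_shift P a n : ccount (fun i => P (S i)) a n = ccount P (S a) n.
Proof. induction n; simpl; auto. Qed.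

Lemma ccount_shift1 P a n :
  (ccount P (S a) n <= ccount P a n + 1)%nat /\ (ccount P a n <= ccount P (S a) n + 1)%nat.
Proof.
  assert (Hfront : ccount P a (S n) = (ind (P a) + ccount P (S a) n)%nat).
  { induction n as [|n IH]; [simpl; rewrite Nat.add_0_r; lia|].
    change (ccount P a (S (S n))) with (ccount P a (S n) + ind (P (a + S n)%nat))%nat.
    rewrite IH. simpl. replace (S (a + n)) with (a + S n)%nat by lia. lia. }
  simpl in Hfront. pose proof (ind_le (P a)); pose proof (ind_le (P (a + n)%nat)). lia.
Qed.

Lemma count_in_ccount F a n : count_in F a n = ccount (fun i => F i = true) a n.
Proof.
  induction n as [|n IH]; [reflexivity|].
  unfold count_in in *. rewrite seq_S, filter_app, length_app, IH. simpl.
  unfold ind; destruct excluded_middle_informative as [h|h];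
    destruct (F (a + n)%nat); simpl; try lia; try congruence.
Qed.

(** * Metric spaces *)

Section MetricSpace.
Variables (Y : Type) (dY : Y -> Y -> R).

Notation opn := (Defs.open_set Y dY).
Notation cls := (Defs.closed_set Y dY).

Lemma open_full : opn (fun _ => True).
Proof. intros z _. exists 1; split; auto; lra. Qed.

Lemma open_empty : opn (fun _ => False).
Proof. intros z []. Qed.

Lemma closed_full : cls (fun _ => True).
Proof. intros z H; tauto. Qed.

Lemma closed_empty : cls (fun _ => False).
Proof. intros z _. exists 1; split; auto; lra. Qed.

Lemma open_or U V : opn U -> opn V -> opn (fun w => U w \/ V w).
Proof.
  intros HU HV z [Hz|Hz];
    [destruct (HU z Hz) as [e [He H]]|destruct (HV z Hz) as [e [He H]]];
    exists e; split; auto.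
Qed.

Lemma open_and U V : opn U -> opn V -> opn (fun w => U w /\ V w).
Proof.
  intros HU HV z [Hz1 Hz2].
  destruct (HU z Hz1) as [e1 [He1 H1]], (HV z Hz2) as [e2 [He2 H2]].
  exists (Rmin e1 e2). split; [apply Rmin_glb_lt; auto|]. intros w Hw.
  pose proof (Rmin_l e1 e2); pose proof (Rmin_r e1 e2).
  split; [apply H1|apply H2]; lra.
Qed.

Lemma open_ex (U : nat -> Y -> Prop) : (forall n, opn (U n)) -> opn (fun w => exists n, U n w).
Proof.
  intros HU z [n Hz]. destruct (HU n z Hz) as [e [He H]].
  exists e; split; auto. intros w Hw; exists n; auto.
Qed.

Lemma open_compl_closed U : opn U -> cls (fun w => ~ U w).
Proof.
  intro H. unfold Defs.closed_set.
  replace (fun w => ~ ~ U w) with U; auto. apply set_ext; intro; tauto.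
Qed.

Lemma closed_or K L : cls K -> cls L -> cls (fun w => K w \/ L w).
Proof.
  intros HK HL. unfold Defs.closed_set.
  replace (fun w => ~ (K w \/ L w)) with (fun w => ~ K w /\ ~ L w).
  - apply open_and; auto.
  - apply set_ext; intro; tauto.
Qed.

Lemma closed_and K L : cls K -> cls L -> cls (fun w => K w /\ L w).
Proof.
  intros HK HL. unfold Defs.closed_set.
  replace (fun w => ~ (K w /\ L w)) with (fun w => ~ K w \/ ~ L w).
  - apply open_or; auto.
  - apply set_ext; intro; tauto.
Qed.

Hypothesis Hm : is_metric Y dY.

Lemma d_nonneg a b : 0 <= dY a b. Proof. apply Hm. Qed.
Lemma d_sym a b : dY a b = dY b a. Proof. apply Hm. Qed.
Lemma d_tri a b c : dY a c <= dY a b + dY b c. Proof. apply Hm. Qed.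
Lemma d_refl a : dY a a = 0. Proof. apply Hm; auto. Qed.
Lemma d_eq a b : dY a b = 0 -> a = b. Proof. apply Hm. Qed.

Lemma open_ball c r : opn (fun w => dY c w < r).
Proof.
  intros w Hw. exists (r - dY c w). split; [lra|].
  intros z Hz. pose proof (d_tri c w z). lra.
Qed.

Lemma closed_le (g h : Y -> R) :
  (forall z z', g z <= g z' + dY z z') -> (forall z z', h z <= h z' + dY z z') ->
  cls (fun w => g w <= h w).
Proof.
  intros Hg Hh z Hz. apply Rnot_le_lt in Hz.
  exists ((g z - h z) / 2). split; [lra|]. intros w Hw.
  pose proof (Hg z w). pose proof (Hh w z). rewrite d_sym in H0. lra.
Qed.

Hypothesis Hc : compact_space Y dY.

Lemma compact_closed_cover {I : Type} (K : Y -> Prop) (U : I -> Y -> Prop) :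
  cls K -> (forall i, opn (U i)) -> (forall w, K w -> exists i, U i w) ->
  exists L : list I, forall w, K w -> exists i, In i L /\ U i w.
Proof.
  intros HK HU Hcov.
  destruct (Hc (option I) (fun o w => match o with None => ~ K w | Some i => U i w end))
    as [L HL].
  - intros [i|]; auto.
  - intros w. destruct (classic (K w)) as [Hw|Hw].
    + destruct (Hcov w Hw) as [i Hi]. exists (Some i); auto.
    + exists None; auto.
  - exists (flat_map (fun o => match o with Some i => i :: nil | None => nil end) L).
    intros w Hw. destruct (HL w) as [[i|] [Ho Hi]]; [|tauto].
    exists i; split; auto. apply in_flat_map. exists (Some i); simpl; auto.
Qed.

Lemma compact_subspace (P : Y -> Prop) :
  cls P -> compact_space {y | P y} (fun u v => dY (proj1_sig u) (proj1_sig v)).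
Proof.
  intros HP I U HU Hcov.
  pose (V := fun (i : I) (w : Y) =>
    exists (z : {y | P y}) r, 0 < r /\ (forall u, dY (proj1_sig z) (proj1_sig u) < r -> U i u)
                              /\ dY (proj1_sig z) w < r).
  destruct (compact_closed_cover P V HP) as [L HL].
  - intros i w [z [r [Hr [Hz Hd]]]]. exists (r - dY (proj1_sig z) w). split; [lra|].
    intros q Hq. exists z, r. repeat split; auto. pose proof (d_tri (proj1_sig z) w q). lra.
  - intros w Hw. destruct (Hcov (exist _ w Hw)) as [i Hi]. destruct (HU i _ Hi) as [r [Hr Hr']].
    exists i, (exist _ w Hw), r. simpl. rewrite d_refl. repeat split; auto.
  - exists L. intros u. destruct (HL (proj1_sig u) (proj2_sig u)) as [i [Hi [z [r [_ [Hz Hd]]]]]].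
    exists i; split; auto.
Qed.

End MetricSpace.

(** * The product space [X * X] with the max metric *)

Section Product.
Variables (X : Type) (d : X -> X -> R).
Hypothesis Hm : is_metric X d.

Lemma d2_lt p q e : Defs.d2 d p q < e -> d (fst p) (fst q) < e /\ d (snd p) (snd q) < e.
Proof.
  unfold Defs.d2; intro H.
  pose proof (Rmax_l (d (fst p) (fst q)) (d (snd p) (snd q))).
  pose proof (Rmax_r (d (fst p) (fst q)) (d (snd p) (snd q))). lra.
Qed.

Lemma d2_lt_intro p q e : d (fst p) (fst q) < e -> d (snd p) (snd q) < e -> Defs.d2 d p q < e.
Proof. unfold Defs.d2; intros; apply Rmax_lub_lt; auto. Qed.

Lemma is_metric_d2 : is_metric (X * X) (Defs.d2 d).
Proof.
  unfold Defs.d2. split; [|split; [|split]].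
  - intros p q. pose proof (d_nonneg X d Hm (fst p) (fst q)).
    pose proof (Rmax_l (d (fst p) (fst q)) (d (snd p) (snd q))). lra.
  - intros [a b] [a' b']; simpl. split.
    + intro H. pose proof (Rmax_l (d a a') (d b b')); pose proof (Rmax_r (d a a') (d b b')).
      pose proof (d_nonneg X d Hm a a'); pose proof (d_nonneg X d Hm b b').
      rewrite (d_eq X d Hm a a'), (d_eq X d Hm b b'); auto; lra.
    + intro H; inversion H; subst. rewrite !(d_refl X d Hm). apply Rmax_left; lra.
  - intros p q. rewrite (d_sym X d Hm (fst p)), (d_sym X d Hm (snd p)); auto.
  - intros p q r. apply Rmax_lub.
    + pose proof (d_tri X d Hm (fst p) (fst q) (fst r)).
      pose proof (Rmax_l (d (fst p) (fst q)) (d (snd p) (snd q))).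
      pose proof (Rmax_l (d (fst q) (fst r)) (d (snd q) (snd r))). lra.
    + pose proof (d_tri X d Hm (snd p) (snd q) (snd r)).
      pose proof (Rmax_r (d (fst p) (fst q)) (d (snd p) (snd q))).
      pose proof (Rmax_r (d (fst q) (fst r)) (d (snd q) (snd r))). lra.
Qed.

Hypothesis Hc : compact_space X d.

(** Tychonoff for two factors: given an open cover of [X * X], choose for each
    pair a cover member and a radius; for fixed [a] finitely many second
    coordinates suffice, with a uniform radius [rho a] in the first coordinate;
    finally finitely many first coordinates suffice. *)
Lemma compact_prod : compact_space (X * X) (Defs.d2 d).
Proof.
  intros I V HV Hcov.
  assert (Hab : forall a b, exists ir : I * R,
    0 < snd ir /\ forall q, Defs.d2 d (a, b) q < snd ir -> V (fst ir) q).
  { intros a b. destruct (Hcov (a, b)) as [i Hi]. destruct (HV i _ Hi) as [r [Hr Hr']].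
    exists (i, r); simpl; auto. }
  destruct (choice (fun (ab : X * X) (ir : I * R) =>
    0 < snd ir /\ forall q, Defs.d2 d ab q < snd ir -> V (fst ir) q)) as [ir0 Hir0].
  { intros [a b]; apply Hab. }
  pose (ir := fun a b => ir0 (a, b)).
  assert (Hir : forall a b,
    0 < snd (ir a b) /\ forall q, Defs.d2 d (a, b) q < snd (ir a b) -> V (fst (ir a b)) q).
  { intros a b; apply Hir0. }
  assert (HL : forall a, exists L : list X,
    forall b, exists b0, In b0 L /\ d b0 b < snd (ir a b0) / 2).
  { intro a. apply (Hc X (fun b0 b => d b0 b < snd (ir a b0) / 2)).
    - intros b0; apply open_ball; auto.
    - intros b. exists b. rewrite (d_refl X d Hm). destruct (Hir a b). lra. }
  destruct (choice _ HL) as [L HLs].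
  pose (rho := fun a => fold_right (fun b0 r => Rmin (snd (ir a b0) / 2) r) 1 (L a)).
  assert (Hrho : forall a, 0 < rho a /\ forall b0, In b0 (L a) -> rho a <= snd (ir a b0) / 2).
  { intro a. unfold rho. induction (L a) as [|c l IH]; simpl.
    - split; [lra| tauto].
    - destruct IH as [IH1 IH2]. destruct (Hir a c) as [Hc1 _]. split.
      + apply Rmin_glb_lt; lra.
      + intros b0 [<-|Hin]; [apply Rmin_l|]. eapply Rle_trans; [apply Rmin_r| auto]. }
  destruct (Hc X (fun a a' => d a a' < rho a)) as [L2 HL2].
  - intros a; apply open_ball; auto.
  - intro a. exists a. rewrite (d_refl X d Hm). apply Hrho.
  - exists (flat_map (fun a => map (fun b0 => fst (ir a b0)) (L a)) L2).
    intros [a' b']. destruct (HL2 a') as [a [Ha Ha']]. destruct (HLs a b') as [b0 [Hb0 Hb0']].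
    exists (fst (ir a b0)). split.
    + apply in_flat_map. exists a; split; auto. apply in_map_iff; exists b0; auto.
    + destruct (Hir a b0) as [Hpos Hball]. apply Hball, d2_lt_intro; simpl.
      * destruct (Hrho a) as [_ H]. specialize (H b0 Hb0). lra.
      * lra.
Qed.

End Product.

(** * Dynamics and the orbit closure [Z] of a pair *)

Lemma iterate_add {A} (f : A -> A) n m w : iterate f (n + m) w = iterate f n (iterate f m w).
Proof. induction n as [|n IH]; simpl; auto. rewrite IH; auto. Qed.

Lemma iterate_comm {A} (f : A -> A) n w : iterate f n (f w) = f (iterate f n w).
Proof. induction n as [|n IH]; simpl; auto. rewrite IH; auto. Qed.

Section Dynamics.
Variables (X : Type) (d : X -> X -> R) (T : X -> X).
Hypothesis Hm : is_metric X d.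
Hypothesis Hcont : continuous_map X d T.

Lemma continuous_iterate n z e : 0 < e ->
  exists del, 0 < del /\ forall z', d z z' < del -> d (iterate T n z) (iterate T n z') < e.
Proof.
  revert e. induction n as [|n IH]; intros e He; simpl.
  - exists e; auto.
  - destruct (Hcont (iterate T n z) e He) as [d1 [Hd1 H1]].
    destruct (IH d1 Hd1) as [d2 [Hd2 H2]]. exists d2; split; auto.
Qed.

Lemma continuous_window z a n e : 0 < e -> exists del, 0 < del /\ forall z', d z z' < del ->
  forall i, (i < n)%nat -> d (iterate T (a + i) z) (iterate T (a + i) z') < e.
Proof.
  intro He. induction n as [|n IH].
  - exists 1; split; [lra|]. intros; lia.
  - destruct IH as [d1 [Hd1 H1]]. destruct (continuous_iterate (a + n) z e He) as [d2 [Hd2 H2]].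
    exists (Rmin d1 d2). split; [apply Rmin_glb_lt; auto|]. intros z' Hz' i Hi.
    pose proof (Rmin_l d1 d2); pose proof (Rmin_r d1 d2).
    destruct (Nat.eq_dec i n) as [->|]; [apply H2; lra|apply H1; [lra|lia]].
Qed.

Variables (x y : X).

Notation oc := (orbit_closure d T x y).
Notation Z := (Zsub d T x y).
Notation dz := (dZ d T x y).

Lemma orbit_closure_orbit n : oc (iterate T n x, iterate T n y).
Proof. intros e He. exists n. rewrite (d_refl _ _ (is_metric_d2 X d Hm)); auto. Qed.

Lemma orbit_closure_TT p : oc p -> oc (TT T p).
Proof.
  intros Hp e He. destruct (Hcont (fst p) e He) as [d1 [Hd1 H1]].
  destruct (Hcont (snd p) e He) as [d3 [Hd3 H3]].
  destruct (Hp (Rmin d1 d3)) as [n Hn]; [apply Rmin_glb_lt; auto|].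
  exists (S n). apply d2_lt in Hn. destruct Hn as [Hn1 Hn2].
  pose proof (Rmin_l d1 d3); pose proof (Rmin_r d1 d3).
  apply d2_lt_intro; simpl; [apply H1|apply H3]; simpl in *; lra.
Qed.

Lemma orbit_closure_closed : Defs.closed_set (X * X) (Defs.d2 d) oc.
Proof.
  intros p Hp. apply not_all_ex_not in Hp. destruct Hp as [e Hp].
  apply imply_to_and in Hp. destruct Hp as [He Hp].
  exists (e / 2). split; [lra|]. intros q Hq Hoc.
  destruct (Hoc (e / 2)) as [n Hn]; [lra|]. apply Hp. exists n.
  pose proof (d_tri _ _ (is_metric_d2 X d Hm) p q (iterate T n x, iterate T n y)). lra.
Qed.

Lemma is_metric_Z : is_metric Z dz.
Proof.
  pose proof (is_metric_d2 X d Hm) as H2. unfold dZ. split; [|split; [|split]].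
  - intros; apply (d_nonneg _ _ H2).
  - intros [p hp] [q hq]; simpl. split.
    + intro H. apply (d_eq _ _ H2) in H. subst. f_equal; apply proof_irrelevance.
    + intro H; inversion H; subst. apply (d_refl _ _ H2).
  - intros; apply (d_sym _ _ H2).
  - intros; apply (d_tri _ _ H2).
Qed.

Lemma compact_Z : compact_space X d -> compact_space Z dz.
Proof.
  intro Hc. exact (compact_subspace _ _ (is_metric_d2 X d Hm) (compact_prod X d Hm Hc)
                     oc orbit_closure_closed).
Qed.

Definition TTZ (u : Z) : Z := exist _ (TT T (proj1_sig u)) (orbit_closure_TT _ (proj2_sig u)).
Definition orbZ n : Z := exist _ (iterate T n x, iterate T n y) (orbit_closure_orbit n).

Lemma Z_eq (u v : Z) : proj1_sig u = proj1_sig v -> u = v.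
Proof.
  destruct u as [p hp], v as [q hq]; simpl; intro; subst. f_equal; apply proof_irrelevance.
Qed.

Lemma TTZ_orbZ n : TTZ (orbZ n) = orbZ (S n).
Proof. apply Z_eq. reflexivity. Qed.

Lemma iterate_TTZ n w :
  proj1_sig (iterate TTZ n w) = (iterate T n (fst (proj1_sig w)), iterate T n (snd (proj1_sig w))).
Proof. induction n as [|n IH]; simpl; [destruct (proj1_sig w); auto|]. rewrite IH. reflexivity. Qed.

Lemma preZ_TTZ A : preZ d T x y A = fun w => A (TTZ w).
Proof.
  apply set_ext. intro w. unfold preZ. split.
  - intros [v [Hv HA]]. replace (TTZ w) with v; auto. apply Z_eq; auto.
  - intro HA. exists (TTZ w). split; auto.
Qed.

Lemma TTZ_continuous u e : 0 < e ->
  exists del, 0 < del /\ forall v, dz u v < del -> dz (TTZ u) (TTZ v) < e.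
Proof.
  intro He. destruct u as [p hp]. destruct (Hcont (fst p) e He) as [d1 [Hd1 H1]].
  destruct (Hcont (snd p) e He) as [d3 [Hd3 H3]].
  exists (Rmin d1 d3). split; [apply Rmin_glb_lt; auto|].
  intros [q hq] Hq. unfold dZ in *; simpl in *. apply d2_lt in Hq. destruct Hq.
  pose proof (Rmin_l d1 d3); pose proof (Rmin_r d1 d3).
  apply d2_lt_intro; simpl; [apply H1|apply H3]; lra.
Qed.

Definition gap (w : Z) : R := d (fst (proj1_sig w)) (snd (proj1_sig w)).

Lemma gap_lipschitz u v : gap u <= gap v + 2 * dz u v.
Proof.
  unfold gap, dZ, Defs.d2.
  pose proof (d_tri X d Hm (fst (proj1_sig u)) (fst (proj1_sig v)) (snd (proj1_sig u))).
  pose proof (d_tri X d Hm (fst (proj1_sig v)) (snd (proj1_sig v)) (snd (proj1_sig u))).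
  rewrite (d_sym X d Hm (snd (proj1_sig v))) in H0.
  pose proof (Rmax_l (d (fst (proj1_sig u)) (fst (proj1_sig v))) (d (snd (proj1_sig u)) (snd (proj1_sig v)))).
  pose proof (Rmax_r (d (fst (proj1_sig u)) (fst (proj1_sig v))) (d (snd (proj1_sig u)) (snd (proj1_sig v)))).
  lra.
Qed.

Lemma open_gap_gt e : Defs.open_set Z dz (fun w => e < gap w).
Proof.
  intros w Hw. exists ((gap w - e) / 2). split; [lra|].
  intros v Hv. pose proof (gap_lipschitz w v). lra.
Qed.

Lemma open_gap_lt e : Defs.open_set Z dz (fun w => gap w < e).
Proof.
  intros w Hw. exists ((e - gap w) / 2). split; [lra|].
  intros v Hv. pose proof (gap_lipschitz v w). rewrite (d_sym _ _ is_metric_Z v w) in H. lra.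
Qed.

End Dynamics.

(** * Banach proximality is uniform over the orbit closure: (1) => (3) *)

Definition close_times {X} (d : X -> X -> R) (T : X -> X) (u v : X) (eps : R) : nat -> bool :=
  fun n => if Rlt_dec (d (iterate T n u) (iterate T n v)) eps then true else false.

Section Uniformity.
Variables (X : Type) (d : X -> X -> R) (T : X -> X) (x y : X).
Hypothesis Hm : is_metric X d.
Hypothesis Hcont : continuous_map X d T.

(** The density bound for [(x, y)] at scale [e/3] gives the bound at scale [e],
    with the same [N], for every pair [p] of the orbit closure: a window of the
    orbit of [p] is shadowed, within [e/3] in each coordinate, by a window of
    the orbit of [(x, y)]. *)
Lemma banach_proximal_uniform : banach_proximal d T x y ->
  forall e lam, 0 < e -> lam < 1 -> exists N, (1 <= N)%nat /\
    forall p, orbit_closure d T x y p -> forall a n, (N <= n)%nat ->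
      lam * INR n <= INR (count_in (close_times d T (fst p) (snd p) e) a n).
Proof.
  intros BP e lam He Hl. destruct (BP (e / 3) ltac:(lra) lam Hl) as [N [HN1 HN]].
  exists N; split; auto. intros p Hp a n Hn.
  destruct (continuous_window X d T Hcont (fst p) a n (e / 3) ltac:(lra)) as [d1 [Hd1 H1]].
  destruct (continuous_window X d T Hcont (snd p) a n (e / 3) ltac:(lra)) as [d3 [Hd3 H3]].
  destruct (Hp (Rmin d1 d3)) as [m Hmp]; [apply Rmin_glb_lt; auto|].
  apply d2_lt in Hmp. destruct Hmp as [Hm1 Hm2]. simpl in Hm1, Hm2.
  pose proof (Rmin_l d1 d3); pose proof (Rmin_r d1 d3).
  eapply Rle_trans; [apply (HN (m + a)%nat n Hn)|].
  rewrite !count_in_ccount. apply le_INR, ccount_mono.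
  intros i Hi. unfold close_times.
  destruct Rlt_dec as [Hxy|]; [|discriminate]. intros _.
  destruct Rlt_dec as [|Hng]; auto. exfalso; apply Hng.
  specialize (H1 (iterate T m x) ltac:(lra) i Hi). specialize (H3 (iterate T m y) ltac:(lra) i Hi).
  rewrite <- !iterate_add in H1, H3. replace (a + i + m)%nat with (m + a + i)%nat in H1, H3 by lia.
  pose proof (d_tri X d Hm (iterate T (a + i) (fst p)) (iterate T (m + a + i) x)
                (iterate T (a + i) (snd p))) as Htri1.
  pose proof (d_tri X d Hm (iterate T (m + a + i) x) (iterate T (m + a + i) y)
                (iterate T (a + i) (snd p))) as Htri2.
  rewrite (d_sym X d Hm (iterate T (m + a + i) y)) in Htri2. lra.
Qed.

Lemma banach_proximal_orbit_closure : banach_proximal d T x y ->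
  forall p, orbit_closure d T x y p -> banach_proximal d T (fst p) (snd p).
Proof.
  intros BP p Hp eps Heps lam Hlam.
  destruct (banach_proximal_uniform BP eps lam Heps Hlam) as [N [HN1 HN]].
  exists N; split; auto. intros a n Hn. apply (HN p Hp a n Hn).
Qed.

End Uniformity.

(** * From a finitely additive set function to an invariant Borel measure

    On a compact metric space [W], let [nu] be a finitely additive probability
    defined on all subsets.  Its inner content on open sets,
    [nuI U = sup {nu K | K closed, K ⊆ U}], is countably subadditive (by
    compactness and a separation lemma), and the outer measure
    [mu A = inf {nuI U | U open, A ⊆ U}] is Carathéodory-regular for open
    sets, hence a Borel probability with [nu K <= mu K] on closed [K].  If
    [nu] is invariant under a continuous map [f], so is [mu]. *)

Section Regularisation.
Variables (W : Type) (dw : W -> W -> R).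
Hypothesis Hm : is_metric W dw.
Hypothesis Wc : compact_space W dw.

Notation opn := (Defs.open_set W dw).
Notation cls := (Defs.closed_set W dw).
Local Notation dw_nonneg := (d_nonneg W dw Hm).
Local Notation dw_tri := (d_tri W dw Hm).
Local Notation dw_refl := (d_refl W dw Hm).

Definition dist_to (S : W -> Prop) (z : W) : R :=
  Inf (fun r => r = 1 \/ exists s, S s /\ r = Rmin 1 (dw z s)).

Lemma dist_to_bounded_below S z :
  exists m, forall r, (r = 1 \/ exists s, S s /\ r = Rmin 1 (dw z s)) -> m <= r.
Proof. exists 0. intros r [->|[s [_ ->]]]; [lra|]. apply Rmin_glb; [lra|apply dw_nonneg]. Qed.

Lemma dist_to_le1 S z : dist_to S z <= 1.
Proof. apply Inf_lb; auto. apply dist_to_bounded_below. Qed.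

Lemma dist_to_in S z : S z -> dist_to S z = 0.
Proof.
  intro H. apply Rle_antisym.
  - replace 0 with (Rmin 1 (dw z z)) by (rewrite dw_refl; apply Rmin_right; lra).
    apply Inf_lb; [apply dist_to_bounded_below|]. right; exists z; auto.
  - apply Inf_greatest; [exists 1; auto|].
    intros r [->|[s [_ ->]]]; [lra|]. apply Rmin_glb; [lra|apply dw_nonneg].
Qed.

Lemma dist_to_lipschitz S z z' : dist_to S z <= dist_to S z' + dw z z'.
Proof.
  assert (dist_to S z - dw z z' <= dist_to S z'); [|lra].
  apply Inf_greatest; [exists 1; auto|]. intros r [->|[s [Hs ->]]].
  - pose proof (dist_to_le1 S z); pose proof (dw_nonneg z z'); lra.
  - assert (dist_to S z <= Rmin 1 (dw z s)).
    { apply Inf_lb; [apply dist_to_bounded_below|]. right; exists s; auto. }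
    pose proof (dw_tri z z' s). pose proof (dw_nonneg z z').
    unfold Rmin in *. repeat destruct Rle_dec; lra.
Qed.

Lemma dist_to_compl_pos U z : opn U -> U z -> 0 < dist_to (fun w => ~ U w) z.
Proof.
  intros HU Hz. destruct (HU z Hz) as [e [He H]].
  apply Rlt_le_trans with (Rmin 1 e); [apply Rmin_glb_lt; lra|].
  apply Inf_greatest; [exists 1; auto|]. intros q [->|[s [Hs ->]]]; [apply Rmin_l|].
  destruct (Rlt_dec (dw z s) e) as [Hlt|Hge]; [exfalso; apply Hs; auto|].
  unfold Rmin; repeat destruct Rle_dec; lra.
Qed.

Lemma closed_split U V K : opn U -> opn V -> cls K -> (forall w, K w -> U w \/ V w) ->
  exists K1 K2, cls K1 /\ cls K2 /\ (forall w, K1 w -> U w) /\ (forall w, K2 w -> V w) /\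
     (forall w, K w -> K1 w \/ K2 w).
Proof.
  intros HU HV HK Hcov.
  set (gU := dist_to (fun w => ~ U w)). set (gV := dist_to (fun w => ~ V w)).
  exists (fun w => K w /\ gV w <= gU w), (fun w => K w /\ gU w <= gV w).
  split; [apply closed_and, closed_le; auto; apply dist_to_lipschitz|].
  split; [apply closed_and, closed_le; auto; apply dist_to_lipschitz|].
  split; [|split].
  - intros w [Hw Hle]. apply NNPP; intro HnU. assert (gU w = 0) by (apply dist_to_in; auto).
    destruct (Hcov w Hw) as [?|HVw]; [tauto|].
    pose proof (dist_to_compl_pos V w HV HVw). fold gV in H0. lra.
  - intros w [Hw Hle]. apply NNPP; intro HnV. assert (gV w = 0) by (apply dist_to_in; auto).
    destruct (Hcov w Hw) as [HUw|?]; [|tauto].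
    pose proof (dist_to_compl_pos U w HU HUw). fold gU in H0. lra.
  - intros w Hw. destruct (Rle_dec (gV w) (gU w)); [left|right]; split; auto; lra.
Qed.

Variable nu : (W -> Prop) -> R.
Hypothesis nu_nonneg : forall A, 0 <= nu A.
Hypothesis nu_add : forall A B, (forall w, A w -> B w -> False) ->
  nu (fun w => A w \/ B w) = nu A + nu B.
Hypothesis nu_full : nu (fun _ => True) = 1.

Lemma nu_empty : nu (fun _ => False) = 0.
Proof.
  pose proof (nu_add (fun _ => False) (fun _ => False)) as H. cbv beta in H.
  replace (fun w : W => False \/ False) with (fun _ : W => False) in H
    by (apply set_ext; intro; tauto).
  assert (nu (fun _ => False) = nu (fun _ => False) + nu (fun _ => False)) by (apply H; auto).
  clear H. lra.
Qed.

Lemma nu_mono A B : (forall w, A w -> B w) -> nu A <= nu B.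
Proof.
  intro H. replace B with (fun w => A w \/ (B w /\ ~ A w)).
  - rewrite nu_add by (intros w ? []; auto).
    pose proof (nu_nonneg (fun w => B w /\ ~ A w)). lra.
  - apply set_ext; intro w. split; [intros [?|[]]; auto|].
    intro. destruct (classic (A w)); auto.
Qed.

Lemma nu_le1 A : nu A <= 1.
Proof. rewrite <- nu_full. apply nu_mono; auto. Qed.

Lemma nu_subadd A B : nu (fun w => A w \/ B w) <= nu A + nu B.
Proof.
  replace (fun w => A w \/ B w) with (fun w => A w \/ (B w /\ ~ A w))
    by (apply set_ext; intro w; tauto).
  rewrite nu_add by (intros w ? []; auto).
  assert (nu (fun w => B w /\ ~ A w) <= nu B) by (apply nu_mono; tauto). lra.
Qed.

Definition nuI (U : W -> Prop) : R :=
  Sup (fun r => exists K, cls K /\ (forall w, K w -> U w) /\ r = nu K).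

Lemma nuI_ge U K : cls K -> (forall w, K w -> U w) -> nu K <= nuI U.
Proof.
  intros HK HKU. apply Sup_ub; [|exists K; auto].
  exists 1. intros r [K' [_ [_ ->]]]. apply nu_le1.
Qed.

Lemma nuI_le U m : (forall K, cls K -> (forall w, K w -> U w) -> nu K <= m) -> nuI U <= m.
Proof.
  intros H. apply Sup_least; [|intros r [K [HK [HKU ->]]]; auto].
  exists (nu (fun _ => False)), (fun _ => False). split; [apply closed_empty|split; auto; tauto].
Qed.

Lemma nuI_approx U e : 0 < e -> exists K, cls K /\ (forall w, K w -> U w) /\ nuI U - e < nu K.
Proof.
  intro He.
  destruct (Sup_approx (fun r => exists K, cls K /\ (forall w, K w -> U w) /\ r = nu K) e)
    as [r [[K [HK [HKU ->]]] Hr]]; auto.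
  - exists (nu (fun _ => False)), (fun _ => False). split; [apply closed_empty|split; auto; tauto].
  - exists 1. intros r [K' [_ [_ ->]]]. apply nu_le1.
  - exists K; auto.
Qed.

Lemma nuI_nonneg U : 0 <= nuI U.
Proof. rewrite <- nu_empty. apply nuI_ge; [apply closed_empty|tauto]. Qed.

Lemma nuI_empty : nuI (fun _ => False) = 0.
Proof.
  apply Rle_antisym; [|apply nuI_nonneg].
  apply nuI_le. intros K _ HK. rewrite <- nu_empty. apply nu_mono; auto.
Qed.

Lemma nuI_mono U V : (forall w, U w -> V w) -> nuI U <= nuI V.
Proof. intro H. apply nuI_le. intros K HK HKU. apply nuI_ge; auto. Qed.

(** Finite subadditivity of [nuI], via the separation lemma. *)
Lemma nuI_subadd U V : opn U -> opn V -> nuI (fun w => U w \/ V w) <= nuI U + nuI V.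
Proof.
  intros HU HV. apply nuI_le. intros K HK HKUV.
  destruct (closed_split U V K HU HV HK HKUV) as [K1 [K2 [H1 [H2 [H3 [H4 H5]]]]]].
  apply Rle_trans with (nu (fun w => K1 w \/ K2 w)); [apply nu_mono; auto|].
  eapply Rle_trans; [apply nu_subadd|].
  pose proof (nuI_ge U K1 H1 H3). pose proof (nuI_ge V K2 H2 H4). lra.
Qed.

Definition union_below (U : nat -> W -> Prop) N := fun w => exists n, (n < N)%nat /\ U n w.

Lemma union_below_S U N : union_below U (S N) = (fun w => union_below U N w \/ U N w).
Proof.
  apply set_ext; intro w; unfold union_below; split.
  - intros [n [Hn Hw]]. destruct (Nat.eq_dec n N) as [->|]; [right; auto|].
    left; exists n; split; auto; lia.
  - intros [[n [Hn Hw]]|Hw]; [exists n; split; auto; lia|exists N; split; auto].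
Qed.

Lemma union_below_0 U : union_below U 0 = fun _ => False.
Proof. apply set_ext; intro w; unfold union_below; split; [intros [n [Hn _]]; lia|tauto]. Qed.

Lemma nuI_union_below U N : (forall n, opn (U n)) ->
  nuI (union_below U N) <= fsum (fun n => nuI (U n)) N.
Proof.
  intro HU. induction N as [|N IH]; simpl.
  - rewrite union_below_0, nuI_empty; lra.
  - rewrite union_below_S. eapply Rle_trans; [apply nuI_subadd; auto|].
    + intros w [n [Hn Hw]]. destruct (HU n w Hw) as [e [He H]].
      exists e; split; auto. intros v Hv. exists n; auto.
    + lra.
Qed.

Fixpoint list_max (l : list nat) : nat :=
  match l with nil => O | a :: l => Nat.max a (list_max l) end.

Lemma list_max_in l n : In n l -> (n <= list_max l)%nat.
Proof. induction l; simpl; [tauto|]. intros [->|H]; [lia|]. specialize (IHl H); lia. Qed.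

(** Countable subadditivity of the inner content: a closed set inside a
    countable open union lies, by compactness, in a finite subunion. *)
Lemma nuI_countable_subadd U M : (forall n, opn (U n)) ->
  (forall N, fsum (fun n => nuI (U n)) N <= M) -> nuI (fun w => exists n, U n w) <= M.
Proof.
  intros HU HS. apply nuI_le. intros K HK HKU.
  destruct (compact_closed_cover W dw Wc K U HK HU HKU) as [L HL].
  eapply Rle_trans; [|apply (HS (S (list_max L)))].
  eapply Rle_trans; [|apply nuI_union_below; auto].
  apply nuI_ge; auto. intros w Hw. destruct (HL w Hw) as [i [Hi Hw']].
  exists i; split; auto. apply list_max_in in Hi; lia.
Qed.

Definition mu (A : W -> Prop) : R :=
  Inf (fun r => exists U, opn U /\ (forall w, A w -> U w) /\ r = nuI U).

Lemma mu_le A U : opn U -> (forall w, A w -> U w) -> mu A <= nuI U.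
Proof.
  intros HU HAU. apply Inf_lb; [|exists U; auto].
  exists 0. intros r [U' [_ [_ ->]]]. apply nuI_nonneg.
Qed.

Lemma mu_ge A m : (forall U, opn U -> (forall w, A w -> U w) -> m <= nuI U) -> m <= mu A.
Proof.
  intro H. apply Inf_greatest; [|intros r [U [HU [HAU ->]]]; auto].
  exists (nuI (fun _ => True)), (fun _ => True). split; [apply open_full|auto].
Qed.

Lemma mu_approx A e : 0 < e -> exists U, opn U /\ (forall w, A w -> U w) /\ nuI U < mu A + e.
Proof.
  intro He.
  destruct (Inf_approx (fun r => exists U, opn U /\ (forall w, A w -> U w) /\ r = nuI U) e)
    as [r [[U [HU [HAU ->]]] Hr]]; auto.
  - exists (nuI (fun _ => True)), (fun _ => True). split; [apply open_full|auto].
  - exists 0. intros r [U' [_ [_ ->]]]. apply nuI_nonneg.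
  - exists U; auto.
Qed.

Lemma mu_nonneg A : 0 <= mu A.
Proof. apply mu_ge. intros; apply nuI_nonneg. Qed.

Lemma mu_mono A B : (forall w, A w -> B w) -> mu A <= mu B.
Proof. intro H. apply mu_ge. intros U HU HBU. apply mu_le; auto. Qed.

Lemma mu_closed_ge K : cls K -> nu K <= mu K.
Proof. intro HK. apply mu_ge. intros U HU HKU. apply nuI_ge; auto. Qed.

Lemma mu_full : mu (fun _ => True) = 1.
Proof.
  apply Rle_antisym.
  - eapply Rle_trans; [apply (mu_le _ (fun _ => True)); auto; apply open_full|].
    apply nuI_le. intros; apply nu_le1.
  - rewrite <- nu_full. apply mu_closed_ge, closed_full.
Qed.

Lemma mu_empty : mu (fun _ => False) = 0.
Proof.
  apply Rle_antisym; [|apply mu_nonneg].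
  rewrite <- nuI_empty. apply mu_le; auto. apply open_empty.
Qed.

Lemma mu_subadd A B : mu (fun w => A w \/ B w) <= mu A + mu B.
Proof.
  apply Rnot_lt_le; intro Hlt. set (e := (mu (fun w => A w \/ B w) - mu A - mu B) / 3).
  assert (He : 0 < e) by (unfold e; lra).
  destruct (mu_approx A e He) as [U [HU [HAU HU']]].
  destruct (mu_approx B e He) as [V [HV [HBV HV']]].
  assert (mu (fun w => A w \/ B w) <= nuI U + nuI V); [|unfold e in *; lra].
  eapply Rle_trans; [apply (mu_le _ (fun w => U w \/ V w))|apply nuI_subadd; auto].
  - apply open_or; auto.
  - intros w [?|?]; auto.
Qed.

(** Countable subadditivity of [mu], by an [e / 2^(n+1)] argument. *)
Lemma mu_countable_subadd A M : (forall N, fsum (fun n => mu (A n)) N <= M) ->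
  mu (fun w => exists n, A n w) <= M.
Proof.
  intro HS. apply Rnot_lt_le; intro Hlt. set (e := (mu (fun w => exists n, A n w) - M) / 2).
  assert (He : 0 < e) by (unfold e; lra).
  assert (Hp : forall n, 0 < e / 2 ^ (S n)) by (intro n; apply Rdiv_lt_0_compat, pow_lt; lra).
  destruct (choice (fun n U => opn U /\ (forall w, A n w -> U w) /\
                                 nuI U < mu (A n) + e / 2 ^ (S n))) as [U HU].
  { intro n. apply mu_approx, Hp. }
  assert (mu (fun w => exists n, A n w) <= M + e); [|unfold e in *; lra].
  eapply Rle_trans.
  { apply (mu_le _ (fun w => exists n, U n w)); [apply open_ex; intro n; apply HU|].
    intros w [n Hw]; exists n; apply HU; auto. }
  apply nuI_countable_subadd; [intro; apply HU|]. intro N.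
  eapply Rle_trans.
  { apply fsum_le with (g := fun n => mu (A n) + e * / 2 ^ (S n)).
    intros i _. destruct (HU i) as [_ [_ H]]. unfold Rdiv in H. lra. }
  rewrite fsum_plus, fsum_scal, fsum_geometric. specialize (HS N).
  assert (0 < / 2 ^ N) by (apply Rinv_0_lt_compat, pow_lt; lra). nra.
Qed.

(** Open sets split every set additively (the key Carathéodory inequality):
    approximate [A] from outside by [V], then [V ∩ E] from inside by a closed
    [K]; [V \ K] still covers [A \ E]. *)
Lemma mu_open_split E A : opn E ->
  mu (fun w => A w /\ E w) + mu (fun w => A w /\ ~ E w) <= mu A.
Proof.
  intro HE. apply Rnot_lt_le; intro Hlt.
  set (e := (mu (fun w => A w /\ E w) + mu (fun w => A w /\ ~ E w) - mu A) / 3).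
  assert (He : 0 < e) by (unfold e; lra).
  destruct (mu_approx A e He) as [V [HV [HAV HV']]].
  destruct (nuI_approx (fun w => V w /\ E w) e He) as [K [HK [HKVE HKnu]]].
  assert (H1 : mu (fun w => A w /\ E w) <= nuI (fun w => V w /\ E w)).
  { apply mu_le; [apply open_and; auto|]. intros w []; auto. }
  assert (H2 : mu (fun w => A w /\ ~ E w) <= nuI (fun w => V w /\ ~ K w)).
  { apply mu_le; [apply open_and; auto|].
    intros w [Hw1 Hw2]. split; auto. intro HKw. apply Hw2, HKVE; auto. }
  assert (H3 : nuI (fun w => V w /\ ~ K w) <= nuI V - nu K).
  { apply nuI_le. intros K' HK' HK'V.
    assert (nu (fun w => K w \/ K' w) <= nuI V).
    { apply nuI_ge; [apply closed_or; auto|].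
      intros w [?|?]; [apply HKVE; auto|apply HK'V; auto]. }
    rewrite nu_add in H; [lra|]. intros w Hw Hw'. apply HK'V in Hw'. tauto. }
  unfold e in *; lra.
Qed.

Definition cmeas (E : W -> Prop) :=
  forall A, mu (fun w => A w /\ E w) + mu (fun w => A w /\ ~ E w) <= mu A.

Lemma cmeas_eq E A : cmeas E -> mu (fun w => A w /\ E w) + mu (fun w => A w /\ ~ E w) = mu A.
Proof.
  intro H. apply Rle_antisym; auto.
  replace A with (fun w => (A w /\ E w) \/ (A w /\ ~ E w)) at 1; [apply mu_subadd|].
  apply set_ext; intro w; destruct (classic (E w)); tauto.
Qed.

Lemma cmeas_ext E F : cmeas E -> (forall w, E w <-> F w) -> cmeas F.
Proof. intros H h. replace F with E; auto. apply set_ext; auto. Qed.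

Lemma cmeas_compl E : cmeas E -> cmeas (fun w => ~ E w).
Proof.
  intros H A. replace (fun w => A w /\ ~ ~ E w) with (fun w => A w /\ E w).
  - pose proof (H A); lra.
  - apply set_ext; intro w; tauto.
Qed.

Lemma cmeas_or E F : cmeas E -> cmeas F -> cmeas (fun w => E w \/ F w).
Proof.
  intros HE HF A.
  assert (h1 : mu (fun w => A w /\ (E w \/ F w)) <=
               mu (fun w => A w /\ E w) + mu (fun w => (A w /\ ~ E w) /\ F w)).
  { replace (fun w => A w /\ (E w \/ F w))
      with (fun w => (A w /\ E w) \/ ((A w /\ ~ E w) /\ F w)); [apply mu_subadd|].
    apply set_ext; intro w; destruct (classic (E w)); tauto. }
  replace (fun w => A w /\ ~ (E w \/ F w)) with (fun w => (A w /\ ~ E w) /\ ~ F w)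
    by (apply set_ext; intro w; tauto).
  pose proof (HF (fun w => A w /\ ~ E w)). pose proof (HE A). lra.
Qed.

Lemma cmeas_and E F : cmeas E -> cmeas F -> cmeas (fun w => E w /\ F w).
Proof.
  intros HE HF. apply cmeas_ext with (fun w => ~ (~ E w \/ ~ F w)); [|intro w; tauto].
  apply cmeas_compl, cmeas_or; apply cmeas_compl; auto.
Qed.

Lemma cmeas_union_below E N : (forall n, cmeas (E n)) -> cmeas (union_below E N).
Proof.
  intro HE. induction N as [|N IH].
  - rewrite union_below_0. intro A.
    replace (fun w => A w /\ False) with (fun _ : W => False) by (apply set_ext; intro; tauto).
    replace (fun w => A w /\ ~ False) with A by (apply set_ext; intro; tauto).
    rewrite mu_empty. lra.
  - rewrite union_below_S. apply cmeas_or; auto.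
Qed.

Lemma mu_finite_add (E : nat -> W -> Prop) A N : (forall n, cmeas (E n)) ->
  (forall m n w, m <> n -> E m w -> E n w -> False) ->
  mu (fun w => A w /\ union_below E N w) = fsum (fun n => mu (fun w => A w /\ E n w)) N.
Proof.
  intros HE Hd. induction N as [|N IH]; simpl.
  - rewrite union_below_0. rewrite <- mu_empty. f_equal. apply set_ext; intro; tauto.
  - rewrite <- IH, <- (cmeas_eq (E N) (fun w => A w /\ union_below E (S N) w) (HE N)).
    rewrite Rplus_comm, union_below_S. f_equal; f_equal; apply set_ext; intro w; [|tauto].
    split; [intros [[Ha [Hu|Hu]] Hn]; [split; auto|tauto]|].
    intros [Ha Hu]. split; [split; auto|].
    intro Hn. destruct Hu as [n [Hn' Hu]]. apply (Hd n N w); auto; lia.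
Qed.

Lemma cmeas_disjoint_union (E : nat -> W -> Prop) : (forall n, cmeas (E n)) ->
  (forall m n w, m <> n -> E m w -> E n w -> False) -> cmeas (fun w => exists n, E n w).
Proof.
  intros HE Hd A.
  assert (H : forall N, fsum (fun n => mu (fun w => A w /\ E n w)) N <=
                        mu A - mu (fun w => A w /\ ~ exists n, E n w)).
  { intro N. rewrite <- mu_finite_add; auto. pose proof (cmeas_union_below E N HE A).
    assert (mu (fun w => A w /\ ~ (exists n, E n w)) <= mu (fun w => A w /\ ~ union_below E N w));
      [|lra].
    apply mu_mono. intros w [Ha Hn]; split; auto. intros [n [_ Hw]]; apply Hn; exists n; auto. }
  assert (mu (fun w => A w /\ exists n, E n w) <= mu A - mu (fun w => A w /\ ~ exists n, E n w));
    [|lra].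
  replace (fun w => A w /\ exists n, E n w) with (fun w => exists n, A w /\ E n w).
  - apply mu_countable_subadd; auto.
  - apply set_ext; intro w; split; [intros [n [? ?]]; split; eauto|intros [? [n ?]]; eauto].
Qed.

Lemma least_index (E : nat -> W -> Prop) w :
  (exists n, E n w) -> exists n, E n w /\ forall m, (m < n)%nat -> ~ E m w.
Proof.
  intros [n Hn]. induction n as [n IH] using (well_founded_induction Wf_nat.lt_wf).
  destruct (classic (exists m, (m < n)%nat /\ E m w)) as [[m [Hmn HEm]]|Hno].
  - apply (IH m); auto.
  - exists n; split; auto. intros m Hmn HEm. apply Hno; eauto.
Qed.

(** Countable unions are made disjoint by removing earlier members. *)
Lemma cmeas_union (E : nat -> W -> Prop) : (forall n, cmeas (E n)) ->
  cmeas (fun w => exists n, E n w).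
Proof.
  intro HE. apply cmeas_ext with (fun w => exists n, E n w /\ ~ union_below E n w).
  - apply cmeas_disjoint_union.
    + intro n. apply cmeas_and; auto. apply cmeas_compl, cmeas_union_below; auto.
    + intros m n w Hmn [HEm HEm'] [HEn HEn'].
      destruct (Nat.lt_total m n) as [H|[H|H]];
        [apply HEn'; exists m; auto|tauto|apply HEm'; exists n; auto].
  - intro w; split; [intros [n [Hn _]]; eauto|]. intro H.
    destruct (least_index E w H) as [n [Hn Hmin]].
    exists n; split; auto. intros [m [Hmn HEm]]. apply (Hmin m); auto.
Qed.

Lemma borel_cmeas A : borel W dw A -> cmeas A.
Proof.
  induction 1.
  - intro B. apply mu_open_split; auto.
  - apply cmeas_compl; auto.
  - apply cmeas_union; auto.
  - apply cmeas_ext with A; auto.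
Qed.

Lemma mu_countable_add (E : nat -> W -> Prop) : (forall n, cmeas (E n)) ->
  (forall m n w, m <> n -> E m w -> E n w -> False) ->
  Un_cv (fun N => sum_f_R0 (fun n => mu (E n)) N) (mu (fun w => exists n, E n w)).
Proof.
  intros HE Hd. set (L := mu (fun w => exists n, E n w)).
  assert (Hfin : forall N, fsum (fun n => mu (E n)) N <= L).
  { intro N. pose proof (mu_finite_add E (fun _ => True) N HE Hd) as H. cbv beta in H.
    replace (fun w => True /\ union_below E N w) with (union_below E N) in H
      by (apply set_ext; intro; tauto).
    rewrite (fsum_ext _ (fun n => mu (fun w => True /\ E n w))).
    - rewrite <- H. apply mu_mono. intros w [n [Hn Hw]]. exists n; exact Hw.
    - intros i _. f_equal. apply set_ext; intro; tauto. }
  intros e He.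
  assert (exists N, L - e < fsum (fun n => mu (E n)) N) as [N HN].
  { apply NNPP; intro Hn. assert (L <= L - e); [|lra].
    apply mu_countable_subadd. intro N.
    destruct (Rle_dec (fsum (fun n => mu (E n)) N) (L - e)); auto.
    exfalso; apply Hn; exists N; lra. }
  exists N. intros n Hn. unfold R_dist. rewrite sum_f_R0_fsum.
  assert (fsum (fun n => mu (E n)) N <= fsum (fun n => mu (E n)) (S n))
    by (apply fsum_mono; [intro; apply mu_nonneg|lia]).
  specialize (Hfin (S n)). rewrite Rabs_left1; lra.
Qed.

Lemma mu_list_null {I : Type} (L : list I) (V : I -> W -> Prop) :
  (forall i, In i L -> mu (V i) = 0) -> mu (fun w => exists i, In i L /\ V i w) = 0.
Proof.
  induction L as [|a L IH]; intro H.
  - rewrite <- mu_empty. f_equal. apply set_ext; intro w; split; [intros [i [[] _]]|tauto].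
  - apply Rle_antisym; [|apply mu_nonneg].
    replace (fun w => exists i, In i (a :: L) /\ V i w)
      with (fun w => V a w \/ exists i, In i L /\ V i w).
    + eapply Rle_trans; [apply mu_subadd|]. rewrite H, IH; simpl; auto; [lra|].
      intros; apply H; simpl; auto.
    + apply set_ext; intro w; split.
      * intros [Hw|[i [Hi Hw]]]; [exists a|exists i]; simpl; auto.
      * intros [i [[<-|Hi] Hw]]; [left; auto|right; eauto].
Qed.

(** Otherwise [B] would be covered by finitely many null open sets. *)
Lemma support_point B : cls B -> 0 < mu B ->
  exists z, B z /\ forall V, opn V -> V z -> 0 < mu V.
Proof.
  intros HB Hpos. apply NNPP; intro Hn.
  assert (Hz : forall z, exists V, opn V /\ mu V = 0 /\ (B z -> V z)).
  { intros z. destruct (classic (B z)) as [Hbz|Hbz].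
    - apply NNPP; intro H. apply Hn. exists z; split; auto. intros V HV HVz.
      destruct (Rlt_dec 0 (mu V)); auto. exfalso; apply H. exists V; repeat split; auto.
      pose proof (mu_nonneg V); lra.
    - exists (fun _ => False). split; [apply open_empty|split; [apply mu_empty|tauto]]. }
  destruct (choice _ Hz) as [Vz HVz].
  destruct (compact_closed_cover W dw Wc B Vz HB) as [L HL].
  - intro z; apply HVz.
  - intros z Hbz. exists z. apply HVz; auto.
  - assert (mu B <= 0); [|lra]. rewrite <- (mu_list_null L Vz).
    + apply mu_mono. intros w Hw. apply HL; auto.
    + intros z _. apply HVz.
Qed.

Lemma support_point_in_full_closed B : cls B -> 0 < mu B ->
  exists z, B z /\ forall C, cls C -> mu C = 1 -> C z.
Proof.
  intros HB Hpos. destruct (support_point B HB Hpos) as [z [Hz Hsupp]].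
  exists z; split; auto. intros C HC H1. apply NNPP; intro Hn.
  pose proof (Hsupp (fun w => ~ C w) HC Hn).
  assert (Hc : cmeas C).
  { apply cmeas_ext with (fun w => ~ ~ C w); [|intro; tauto].
    apply cmeas_compl. intro A. apply mu_open_split; auto. }
  pose proof (cmeas_eq C (fun _ => True) Hc) as Hsplit. cbv beta in Hsplit.
  replace (fun w : W => True /\ C w) with C in Hsplit by (apply set_ext; intro; tauto).
  replace (fun w : W => True /\ ~ C w) with (fun w => ~ C w) in Hsplit
    by (apply set_ext; intro; tauto).
  rewrite mu_full in Hsplit. lra.
Qed.

Lemma mu_prob_measure : prob_measure W dw mu.
Proof.
  split; [apply mu_full|split; [intros; apply mu_nonneg|]].
  intros A HA Hd. apply mu_countable_add; auto. intro n; apply borel_cmeas, HA.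
Qed.

Variable f : W -> W.
Hypothesis f_cont : forall u e, 0 < e ->
  exists del, 0 < del /\ forall v, dw u v < del -> dw (f u) (f v) < e.
Hypothesis nu_inv : forall K, nu (fun w => K (f w)) = nu K.

Lemma open_preimage U : opn U -> opn (fun w => U (f w)).
Proof.
  intros HU z Hz. destruct (HU (f z) Hz) as [e [He H]].
  destruct (f_cont z e He) as [del [Hd Hd']]. exists del; split; auto.
Qed.

Lemma closed_image K : cls K -> cls (fun v => exists k, K k /\ v = f k).
Proof.
  intros HK v Hv.
  assert (Hex : forall k, exists de : R * R, 0 < fst de /\ 0 < snd de /\
     (K k -> snd de <= dw (f k) v / 2 /\ forall w, dw k w < fst de -> dw (f k) (f w) < snd de)).
  { intro k. destruct (classic (K k)) as [Hk|Hk].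
    - assert (Hpos : 0 < dw (f k) v).
      { destruct (dw_nonneg (f k) v) as [h|h]; auto. exfalso. apply Hv. exists k; split; auto.
        symmetry; apply (d_eq W dw Hm); auto. }
      destruct (f_cont k (dw (f k) v / 2)) as [del [Hd H]]; [lra|].
      exists (del, dw (f k) v / 2). simpl. repeat split; auto; lra.
    - exists (1, 1); simpl; repeat split; try lra; tauto. }
  destruct (choice _ Hex) as [de Hde].
  destruct (compact_closed_cover W dw Wc K (fun k w => K k /\ dw k w < fst (de k)) HK) as [L HL].
  - intros k w [Hk Hw]. exists (fst (de k) - dw k w). split; [lra|]. intros w' Hw'. split; auto.
    pose proof (dw_tri k w w'); lra.
  - intros w Hw. exists w. rewrite dw_refl. split; auto. apply Hde.
  - pose (r := fold_right (fun k r => Rmin (snd (de k)) r) 1 L).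
    assert (Hr : 0 < r /\ forall k, In k L -> r <= snd (de k)).
    { unfold r; clear HL; induction L as [|c l IH]; simpl; [split; [lra|tauto]|].
      destruct IH as [IH1 IH2]. split; [apply Rmin_glb_lt; auto; apply Hde|].
      intros k [<-|Hk]; [apply Rmin_l|]. eapply Rle_trans; [apply Rmin_r|auto]. }
    exists r. split; [apply Hr|]. intros v' Hv' [w [Hw ->]].
    destruct (HL w Hw) as [k [Hk [HKk Hkw]]]. destruct (Hde k) as [_ [_ H]].
    destruct (H HKk) as [H1 H2]. specialize (H2 w Hkw). destruct Hr as [_ Hr].
    specialize (Hr k Hk). pose proof (dw_tri (f k) (f w) v).
    rewrite (d_sym W dw Hm (f w) v) in H0. lra.
Qed.

(** [nuI] is invariant on open sets: compare closed subsets via preimages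
    and (closed) images. *)
Lemma nuI_inv U : opn U -> nuI (fun w => U (f w)) = nuI U.
Proof.
  intro HU. apply Rle_antisym; apply nuI_le; intros K HK HKU.
  - apply Rle_trans with (nu (fun w => exists k, K k /\ f w = f k)).
    + apply nu_mono. intros w Hw; exists w; auto.
    + rewrite (nu_inv (fun v => exists k, K k /\ v = f k)).
      apply nuI_ge; [apply closed_image; auto|]. intros v [k [Hk ->]]; auto.
  - rewrite <- (nu_inv K). apply nuI_ge; [exact (open_preimage _ HK)|auto].
Qed.

Lemma mu_inv A : mu (fun w => A (f w)) = mu A.
Proof.
  apply Rle_antisym; apply mu_ge.
  - intros U HU HAU. rewrite <- nuI_inv; auto. apply mu_le; [apply open_preimage; auto|auto].
  - intros V HV HAV. set (U := fun v => ~ exists k, ~ V k /\ v = f k).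
    assert (HUo : opn U) by (apply closed_image, open_compl_closed; auto).
    apply Rle_trans with (nuI U).
    + apply mu_le; auto. intros a Ha [k [Hk ->]]. apply Hk, HAV; auto.
    + rewrite <- nuI_inv; auto. apply nuI_mono. intros w Hw.
      apply NNPP; intro Hn. apply Hw. exists w; auto.
Qed.

Theorem regularisation_invariant : invariant_measure W dw (fun A w => A (f w)) mu.
Proof. split; [apply mu_prob_measure|intros A _; apply mu_inv]. Qed.

End Regularisation.

(** * Borel probability measures *)

Section BorelProbability.
Variables (W : Type) (dw : W -> W -> R).
Notation Bor := (borel W dw).

Lemma borel_empty : Bor (fun _ => False).
Proof. apply borel_open, open_empty. Qed.

Lemma borel_full : Bor (fun _ => True).
Proof. apply borel_open, open_full. Qed.

Lemma borel_or A B : Bor A -> Bor B -> Bor (fun w => A w \/ B w).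
Proof.
  intros HA HB. apply borel_ext with (fun w => exists n, (match n with O => A | _ => B end) w).
  - apply borel_union. intros [|n]; auto.
  - intro w; split; [intros [[|n] H]; auto|].
    intros [H|H]; [exists O|exists 1%nat]; auto.
Qed.

Lemma borel_and A B : Bor A -> Bor B -> Bor (fun w => A w /\ B w).
Proof.
  intros HA HB. apply borel_ext with (fun w => ~ (~ A w \/ ~ B w)); [|intro w; tauto].
  apply borel_compl, borel_or; apply borel_compl; auto.
Qed.

Lemma borel_preimage (f : W -> W) A :
  (forall u e, 0 < e -> exists del, 0 < del /\ forall v, dw u v < del -> dw (f u) (f v) < e) ->
  Bor A -> Bor (fun w => A (f w)).
Proof.
  intros Hf. induction 1.
  - apply borel_open. intros z Hz. destruct (H (f z) Hz) as [e [He H']].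
    destruct (Hf z e He) as [del [Hd Hd']]. exists del; split; auto.
  - apply borel_compl; auto.
  - apply borel_union; auto.
  - apply borel_ext with (fun w => A (f w)); auto.
Qed.

Variable m : (W -> Prop) -> R.
Hypothesis Hpm : prob_measure W dw m.

(** The empty set is null: the constant sequence [m ∅] must sum to [m ∅]. *)
Lemma pm_empty : m (fun _ => False) = 0.
Proof.
  destruct Hpm as [_ [_ Hca]].
  specialize (Hca (fun _ _ => False) (fun _ => borel_empty) (fun _ _ _ _ h _ => h)).
  cbv beta in Hca.
  replace (fun w : W => exists _ : nat, False) with (fun _ : W => False) in Hca
    by (apply set_ext; intro; split; [tauto|intros [_ h]; auto]).
  set (c := m (fun _ => False)) in *.
  assert (Hs : forall N, sum_f_R0 (fun _ => c) N = INR (S N) * c).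
  { intro N. rewrite sum_f_R0_fsum, fsum_const; lra. }
  apply NNPP; intro Hn. destruct (Hca (Rabs c) (Rabs_pos_lt c Hn)) as [N HN].
  specialize (HN (S N) ltac:(lia)). unfold R_dist in HN. rewrite Hs in HN.
  replace (INR (S (S N)) * c - c) with (INR (S N) * c) in HN by (rewrite (S_INR (S N)); ring).
  rewrite Rabs_mult, Rabs_right in HN by (apply Rle_ge, pos_INR).
  pose proof (Rabs_pos_lt c Hn). assert (1 <= INR (S N)) by (rewrite S_INR; pose proof (pos_INR N); lra).
  nra.
Qed.

(** Finite additivity, from countable additivity padded with empty sets. *)
Lemma pm_add A B : Bor A -> Bor B -> (forall w, A w -> B w -> False) ->
  m (fun w => A w \/ B w) = m A + m B.
Proof.
  intros HA HB Hd. destruct Hpm as [_ [_ Hca]].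
  set (C := fun n => match n with O => A | 1%nat => B | _ => fun _ : W => False end).
  specialize (Hca C).
  replace (fun w => exists n, C n w) with (fun w => A w \/ B w) in Hca.
  - apply UL_sequence with (fun N => sum_f_R0 (fun n => m (C n)) N).
    + apply Hca; [intros [|[|n]]; simpl; auto; apply borel_empty|].
      intros [|[|i]] [|[|j]] w Hij; simpl; try tauto; eauto; intros; eapply Hd; eauto.
    + assert (Hsum : forall k, sum_f_R0 (fun n => m (C n)) (S k) = m A + m B).
      { induction k; [reflexivity|]. rewrite tech5, IHk. simpl. rewrite pm_empty. lra. }
      intros e He. exists 1%nat. intros [|k] Hk; [lia|].
      unfold R_dist. rewrite Hsum, Rminus_diag, Rabs_R0; auto.
  - apply set_ext; intro w; split.
    + intros [H|H]; [exists O|exists 1%nat]; auto.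
    + intros [[|[|n]] H]; simpl in H; auto; tauto.
Qed.

Lemma pm_nonneg A : Bor A -> 0 <= m A.
Proof. apply Hpm. Qed.

Lemma pm_compl A : Bor A -> m A + m (fun w => ~ A w) = 1.
Proof.
  intro HA. rewrite <- pm_add by (auto; apply borel_compl; auto).
  replace (fun w => A w \/ ~ A w) with (fun _ : W => True); [apply Hpm|].
  apply set_ext; intro w; split; auto; intros _; apply classic.
Qed.

Lemma pm_modular P Q : Bor P -> Bor Q ->
  m (fun w => P w \/ Q w) + m (fun w => P w /\ Q w) = m P + m Q.
Proof.
  intros HP HQ.
  assert (HQnP : Bor (fun w => Q w /\ ~ P w)) by (apply borel_and; auto; apply borel_compl; auto).
  assert (h1 : m (fun w => P w \/ Q w) = m P + m (fun w => Q w /\ ~ P w)).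
  { rewrite <- pm_add by (auto; intros w ? []; auto). f_equal. apply set_ext; intro w; tauto. }
  assert (h2 : m Q = m (fun w => P w /\ Q w) + m (fun w => Q w /\ ~ P w)).
  { rewrite <- pm_add by (auto; try apply borel_and; auto; intros w [] []; auto).
    f_equal. apply set_ext; intro w; destruct (classic (P w)); tauto. }
  lra.
Qed.

(** Layer-cake bound: if every point lies in at most [M] of the Borel sets
    [A 0], ..., [A (N-1)], their measures sum to at most [M].  With
    [level N j = {w | at least j of them contain w}] one has
    [sum_n m (A n) = sum_(1 <= j <= N) m (level N j)] (by induction on [N]
    and the modular law), and [level N j] is empty for [j > M]. *)
Variable A : nat -> W -> Prop.
Hypothesis HA : forall n, Bor (A n).

Definition multiplicity N w := ccount (fun n => A n w) 0 N.
Definition level N j := fun w => (j <= multiplicity N w)%nat.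

Lemma level_S N j : level (S N) (S j) = (fun w => level N (S j) w \/ (A N w /\ level N j w)).
Proof.
  apply set_ext; intro w. unfold level, multiplicity. simpl ccount. unfold ind.
  destruct excluded_middle_informative as [h|h]; split.
  - intro; right; split; auto; lia.
  - intros [?|[_ ?]]; lia.
  - intro; left; lia.
  - intros [?|[? _]]; [lia|tauto].
Qed.

Lemma level_0 N : level N 0 = fun _ => True.
Proof. apply set_ext; intro w; unfold level; split; auto; lia. Qed.

Lemma level_high N j : (N < j)%nat -> level N j = fun _ => False.
Proof.
  intro H. apply set_ext; intro w; unfold level, multiplicity.
  pose proof (ccount_le (fun n => A n w) 0 N). split; [lia|tauto].
Qed.

Lemma level_borel N j : Bor (level N j).
Proof.
  revert j; induction N as [|N IH]; intros [|j].
  - rewrite level_0; apply borel_full.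
  - rewrite level_high by lia. apply borel_empty.
  - rewrite level_0; apply borel_full.
  - rewrite level_S. apply borel_or; auto. apply borel_and; auto.
Qed.

Lemma layer_cake N : fsum (fun n => m (A n)) N = fsum (fun j => m (level N (S j))) N.
Proof.
  induction N as [|N IH]; auto.
  change (fsum (fun n => m (A n)) (S N)) with (fsum (fun n => m (A n)) N + m (A N)). rewrite IH.
  assert (Hstep : forall j, m (level (S N) (S j)) = m (level N (S j)) +
     (m (fun w => A N w /\ level N j w) - m (fun w => A N w /\ level N (S j) w))).
  { intro j. rewrite level_S.
    pose proof (pm_modular (level N (S j)) (fun w => A N w /\ level N j w)) as Hmod.
    cbv beta in Hmod.
    replace (fun w => level N (S j) w /\ (A N w /\ level N j w))
      with (fun w => A N w /\ level N (S j) w) in Hmod.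
    - specialize (Hmod (level_borel N (S j)) (borel_and _ _ (HA N) (level_borel N j))). lra.
    - apply set_ext; intro w; unfold level; split; intros;
        repeat match goal with h : _ /\ _ |- _ => destruct h end; repeat split; auto; lia. }
  rewrite (fsum_ext _ _ (S N) (fun j _ => Hstep j)).
  rewrite fsum_plus, (fsum_telescope (fun j => m (fun w => A N w /\ level N j w))).
  change (fsum (fun j => m (level N (S j))) (S N))
    with (fsum (fun j => m (level N (S j))) N + m (level N (S N))).
  rewrite level_high, level_0 by lia.
  replace (fun w => A N w /\ True) with (A N) by (apply set_ext; intro; tauto).
  replace (fun w => A N w /\ False) with (fun _ : W => False) by (apply set_ext; intro; tauto).
  rewrite pm_empty. lra.
Qed.

Lemma layer_bound N M : 0 <= M -> (forall w, INR (multiplicity N w) <= M) ->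
  fsum (fun n => m (A n)) N <= M.
Proof.
  intros HM Hmult. rewrite layer_cake.
  assert (Hlev : forall j, 0 <= m (level N (S j)) <= 1 /\ (M < INR (S j) -> m (level N (S j)) = 0)).
  { intro j. pose proof (pm_compl _ (level_borel N (S j))).
    pose proof (pm_nonneg _ (level_borel N (S j))).
    pose proof (pm_nonneg _ (borel_compl _ _ _ (level_borel N (S j)))).
    split; [lra|]. intro Hlt.
    replace (level N (S j)) with (fun _ : W => False); [apply pm_empty|].
    apply set_ext; intro w; unfold level; split; [tauto|].
    intro Hle. apply le_INR in Hle. specialize (Hmult w). lra. }
  enough (forall K, fsum (fun j => m (level N (S j))) K <= INR K /\
                    fsum (fun j => m (level N (S j))) K <= M) by apply H.
  induction K as [|K IH]; [simpl; lra|].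
  change (fsum (fun j => m (level N (S j))) (S K))
    with (fsum (fun j => m (level N (S j))) K + m (level N (S K))).
  destruct (Hlev K) as [[h1 h2] h3]. rewrite S_INR.
  destruct (Rle_dec (INR (S K)) M) as [Hle|Hlt].
  - rewrite S_INR in Hle. lra.
  - rewrite (h3 (Rnot_le_lt _ _ Hlt)). lra.
Qed.

End BorelProbability.

(** * Banach proximality forces the support onto the diagonal: (1) => (2) *)

Section SupportOnDiagonal.
Variables (X : Type) (d : X -> X -> R) (T : X -> X) (x y : X).
Hypothesis Hm : is_metric X d.
Hypothesis Hcont : continuous_map X d T.

Notation Z := (Zsub d T x y).
Notation dz := (dZ d T x y).
Notation TTZ := (TTZ X d T Hcont x y).

(** Every invariant measure on [Z] gives no mass to [{gap > e}]: by
    invariance its preimages under [TTZ^n], [n < N], all have the same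
    measure, while by uniform Banach proximality each point of [Z] lies in at
    most [del * N] of them; the layer-cake bound gives [N * mu {gap > e} <= del * N]. *)
Lemma invariant_measure_far_null mu e : banach_proximal d T x y ->
  invariant_measure Z dz (preZ d T x y) mu -> 0 < e -> mu (fun w => e < gap X d T x y w) = 0.
Proof.
  intros BP [Hpm Hinv] He. set (O := fun w => e < gap X d T x y w).
  assert (HO : borel Z dz O) by apply borel_open, open_gap_gt, Hm.
  apply Rle_antisym; [|apply (pm_nonneg _ _ _ Hpm _ HO)].
  apply le_epsilon. intros del Hdel. rewrite Rplus_0_l.
  destruct (banach_proximal_uniform X d T x y Hm Hcont BP e (1 - del) He ltac:(lra))
    as [N [HN1 HN]].
  set (A := fun n (w : Z) => O (iterate TTZ n w)).
  assert (HA : forall n, borel Z dz (A n)).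
  { induction n as [|n IH]; [exact HO|].
    apply borel_ext with (fun w => A n (TTZ w)).
    - apply borel_preimage; auto. apply TTZ_continuous.
    - intro w. unfold A. rewrite iterate_comm. tauto. }
  assert (HmuA : forall n, mu (A n) = mu O).
  { induction n as [|n IH]; [reflexivity|]. rewrite <- IH, <- (Hinv _ (HA n)).
    f_equal. rewrite (preZ_TTZ X d T Hcont). apply set_ext; intro w.
    unfold A. rewrite iterate_comm. tauto. }
  assert (Hbound : fsum (fun n => mu (A n)) N <= del * INR N).
  { apply (layer_bound Z dz mu Hpm A HA); [apply Rmult_le_pos; [lra|apply pos_INR]|].
    intro w. unfold multiplicity.
    pose proof (HN (proj1_sig w) (proj2_sig w) 0%nat N (Nat.le_refl N)) as Hclose.
    rewrite count_in_ccount in Hclose.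
    pose proof (ccount_disjoint (fun n => A n w)
      (fun i => close_times d T (fst (proj1_sig w)) (snd (proj1_sig w)) e i = true) 0 N) as Hdisj.
    assert (Hsum : (ccount (fun n => A n w) 0 N +
      ccount (fun i => close_times d T (fst (proj1_sig w)) (snd (proj1_sig w)) e i = true) 0 N
      <= N)%nat).
    { apply Hdisj. intros i HAi. unfold A, O, gap in HAi. rewrite iterate_TTZ in HAi.
      unfold close_times. simpl in HAi. destruct Rlt_dec; [lra|discriminate]. }
    apply le_INR in Hsum. rewrite plus_INR in Hsum. lra. }
  rewrite (fsum_ext _ (fun _ => mu O)), fsum_const in Hbound by (intros; apply HmuA).
  assert (1 <= INR N) by (apply (le_INR 1); auto). nra.
Qed.

(** Implication (1) -> (2): a support point [z] with [gap z > e] would lie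
    outside the closed set [{gap <= e}] of full measure. *)
Lemma banach_proximal_support_diagonal : banach_proximal d T x y ->
  forall z : Z, supp Z dz (preZ d T x y) z -> fst (proj1_sig z) = snd (proj1_sig z).
Proof.
  intros BP z Hz. apply (d_eq X d Hm). apply Rle_antisym; [|apply (d_nonneg X d Hm)].
  apply le_epsilon. intros e He. rewrite Rplus_0_l.
  apply Rnot_lt_le. intro Hfar. apply (Hz (fun w => ~ e < gap X d T x y w)); [| |exact Hfar].
  - apply open_compl_closed, open_gap_gt, Hm.
  - intros mu Hmu. pose proof (invariant_measure_far_null mu e BP Hmu He).
    destruct Hmu as [Hpm _].
    pose proof (pm_compl Z dz mu Hpm (fun w => e < gap X d T x y w)
                  (borel_open _ _ _ (open_gap_gt X d T Hm x y e))). lra.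
Qed.

End SupportOnDiagonal.

(** * Ultralimits along a non-principal ultrafilter on [nat] *)

Record nat_ultrafilter (U : (nat -> Prop) -> Prop) : Prop := {
  uf_tail : forall m, U (fun k => (m <= k)%nat);
  uf_proper : ~ U (fun _ => False);
  uf_and : forall A B, U A -> U B -> U (fun k => A k /\ B k);
  uf_mono : forall A B : nat -> Prop, (forall k, A k -> B k) -> U A -> U B;
  uf_ultra : forall A, U A \/ U (fun k => ~ A k) }.

Module UltrafilterExistence.
Import ssreflect ssrbool ssrnat classical_sets filter.

Lemma nat_ultrafilter_exists : exists U, nat_ultrafilter U.
Proof.
have [G [GU sFG]] := ultraFilterLemma eventually_filter.
have PG := @ultra_proper _ _ GU.
exists G; split.
- by move=> m; apply: sFG; exists m => // k /= /leP.
- by move=> H; apply: (@filter_not_empty _ G PG); rewrite (_ : set0 = fun _ => False).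
- by move=> A B GA GB; apply: (@filterI _ G PG A B GA GB).
- by move=> A B AB GA; apply: (@filterS _ G PG A B AB GA).
- by move=> A; apply: (in_ultra_setVsetC A GU).
Qed.
End UltrafilterExistence.

Section Ultralimit.
Variable U : (nat -> Prop) -> Prop.
Hypothesis HU : nat_ultrafilter U.

Definition bounded01 (s : nat -> R) := forall k, 0 <= s k <= 1.

Definition ulim (s : nat -> R) := Sup (fun r => U (fun k => r <= s k)).

Lemma ulim_levels_bounded s : bounded01 s -> bound (fun r => U (fun k => r <= s k)).
Proof.
  intros Hs. exists 1. intros r Hr. destruct (Rle_dec r 1) as [|Hr1]; auto. exfalso.
  apply (uf_proper _ HU), (uf_mono _ HU) with (fun k => r <= s k); auto.
  intros k Hk. specialize (Hs k). lra.
Qed.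

Lemma ulim_ge s c : bounded01 s -> (forall k, c <= s k) -> c <= ulim s.
Proof.
  intros Hs Hc. apply Sup_ub; [apply ulim_levels_bounded; auto|].
  apply (uf_mono _ HU) with (fun k => (0 <= k)%nat); [intros; apply Hc|apply HU].
Qed.

Lemma ulim_spec s : bounded01 s -> forall e, 0 < e -> U (fun k => Rabs (s k - ulim s) < e).
Proof.
  intros Hs e He. set (E := fun r => U (fun k => r <= s k)).
  assert (HE1 : exists r, E r).
  { exists 0. apply (uf_mono _ HU) with (fun k => (0 <= k)%nat); [intros; apply Hs|apply HU]. }
  assert (HE2 : bound E) by (apply ulim_levels_bounded; auto).
  assert (Hlow : U (fun k => ulim s - e < s k)).
  { destruct (Sup_approx E e HE1 HE2 He) as [r [Hr Hr']].
    apply (uf_mono _ HU) with (fun k => r <= s k); auto.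
    intros k Hk. change (ulim s) with (Sup E). lra. }
  assert (Hhigh : U (fun k => s k < ulim s + e)).
  { destruct (uf_ultra _ HU (fun k => s k < ulim s + e)) as [H|H]; auto. exfalso.
    assert (E (ulim s + e)).
    { apply (uf_mono _ HU) with (fun k => ~ s k < ulim s + e); auto. intros k Hk; lra. }
    assert (ulim s + e <= ulim s) by (apply (Sup_ub E); auto). lra. }
  apply (uf_mono _ HU) with (fun k => ulim s - e < s k /\ s k < ulim s + e).
  - intros k [Ha Hb]. apply Rabs_def1; lra.
  - apply (uf_and _ HU); auto.
Qed.

Lemma ulim_unique s l l' : (forall e, 0 < e -> U (fun k => Rabs (s k - l) < e)) ->
  (forall e, 0 < e -> U (fun k => Rabs (s k - l') < e)) -> l = l'.
Proof.
  intros H H'. apply NNPP; intro Hn. set (e := Rabs (l - l') / 2).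
  assert (He : 0 < e) by (unfold e; pose proof (Rabs_pos_lt (l - l') ltac:(lra)); lra).
  apply (uf_proper _ HU), (uf_mono _ HU) with (fun k => Rabs (s k - l) < e /\ Rabs (s k - l') < e).
  - intros k [h1 h2].
    assert (Rabs (l - l') <= Rabs (s k - l) + Rabs (s k - l')).
    { replace (l - l') with (- (s k - l) + (s k - l')) by ring.
      eapply Rle_trans; [apply Rabs_triang|]. rewrite Rabs_Ropp; lra. }
    unfold e in *; lra.
  - apply (uf_and _ HU); auto.
Qed.

Lemma ulim_add s t : bounded01 s -> bounded01 t -> bounded01 (fun k => s k + t k) ->
  ulim (fun k => s k + t k) = ulim s + ulim t.
Proof.
  intros Hs Ht Hst. symmetry. apply ulim_unique with (fun k => s k + t k); [|apply ulim_spec; auto].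
  intros e He.
  apply (uf_mono _ HU) with (fun k => Rabs (s k - ulim s) < e/2 /\ Rabs (t k - ulim t) < e/2).
  - intros k [h1 h2].
    replace (s k + t k - (ulim s + ulim t)) with ((s k - ulim s) + (t k - ulim t)) by ring.
    eapply Rle_lt_trans; [apply Rabs_triang|lra].
  - apply (uf_and _ HU); apply ulim_spec; auto; lra.
Qed.

Lemma ulim_close s t : bounded01 s -> bounded01 t ->
  (forall e, 0 < e -> U (fun k => Rabs (s k - t k) < e)) -> ulim s = ulim t.
Proof.
  intros Hs Ht H. apply ulim_unique with s; [apply ulim_spec; auto|].
  intros e He.
  apply (uf_mono _ HU) with (fun k => Rabs (s k - t k) < e/2 /\ Rabs (t k - ulim t) < e/2).
  - intros k [h1 h2]. replace (s k - ulim t) with ((s k - t k) + (t k - ulim t)) by ring.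
    eapply Rle_lt_trans; [apply Rabs_triang|lra].
  - apply (uf_and _ HU); [apply H|apply ulim_spec]; auto; lra.
Qed.

Lemma ulim_const c : 0 <= c <= 1 -> ulim (fun _ => c) = c.
Proof.
  intro Hc. apply ulim_unique with (fun _ => c); [apply ulim_spec; intro; auto|].
  intros e He. apply (uf_mono _ HU) with (fun k => (0 <= k)%nat); [|apply HU].
  intros. rewrite Rminus_diag, Rabs_R0; auto.
Qed.

End Ultralimit.

(** * Support on the diagonal forces Banach proximality: (2) => (1) *)

Section EmpiricalMeasure.
Variables (X : Type) (d : X -> X -> R) (T : X -> X) (x y : X).
Hypothesis Hm : is_metric X d.
Hypothesis Hcont : continuous_map X d T.

Notation Z := (Zsub d T x y).
Notation dz := (dZ d T x y).
Notation TTZ := (TTZ X d T Hcont x y).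
Notation orbZ := (orbZ X d T Hm x y).

Lemma not_banach_proximal_windows : ~ banach_proximal d T x y ->
  exists e lam (a n : nat -> nat), 0 < e /\ 0 < lam < 1 /\ (forall k, (S k <= n k)%nat) /\
    forall k, INR (count_in (close_times d T x y e) (a k) (n k)) < lam * INR (n k).
Proof.
  intro nBP. apply not_all_ex_not in nBP. destruct nBP as [e nBP].
  apply imply_to_and in nBP. destruct nBP as [He nBP].
  apply not_all_ex_not in nBP. destruct nBP as [lam nBP].
  apply imply_to_and in nBP. destruct nBP as [Hlam1 nBP].
  assert (Hw : forall k, exists an : nat * nat, (S k <= snd an)%nat /\
    INR (count_in (close_times d T x y e) (fst an) (snd an)) < lam * INR (snd an)).
  { intro k. apply NNPP; intro Hk. apply nBP. exists (S k). split; [lia|]. intros a n Hn.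
    apply Rnot_lt_le. intro Hlt. apply Hk. exists (a, n). simpl; auto. }
  destruct (choice _ Hw) as [an Han].
  exists e, lam, (fun k => fst (an k)), (fun k => snd (an k)). repeat split; auto.
  - destruct (Han O) as [h1 h2].
    pose proof (pos_INR (count_in (close_times d T x y e) (fst (an O)) (snd (an O)))).
    assert (1 <= INR (snd (an O))) by (apply (le_INR 1); auto). nra.
  - intro k; apply Han.
  - intro k; apply Han.
Qed.

Variable U : (nat -> Prop) -> Prop.
Hypothesis HU : nat_ultrafilter U.
Variables (e lam : R) (a n : nat -> nat).
Hypothesis Hn : forall k, (S k <= n k)%nat.
Hypothesis Hwin : forall k, INR (count_in (close_times d T x y e) (a k) (n k)) < lam * INR (n k).

(** Frequency of visits of the orbit to [A] in the [k]-th window, and its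
    ultralimit: a finitely additive, [TTZ]-invariant probability on [Z]. *)
Definition window_freq (A : Z -> Prop) k :=
  INR (ccount (fun i => A (orbZ i)) (a k) (n k)) / INR (n k).

Definition empirical (A : Z -> Prop) := ulim U (window_freq A).

Lemma window_length_pos k : 0 < INR (n k).
Proof. apply lt_0_INR. specialize (Hn k). lia. Qed.

Lemma window_freq_bounded A : bounded01 (window_freq A).
Proof.
  intro k. unfold window_freq. pose proof (window_length_pos k).
  pose proof (pos_INR (ccount (fun i => A (orbZ i)) (a k) (n k))).
  pose proof (le_INR _ _ (ccount_le (fun i => A (orbZ i)) (a k) (n k))).
  assert (0 < / INR (n k)) by (apply Rinv_0_lt_compat; lra).
  assert (INR (n k) * / INR (n k) = 1) by (field; lra).
  unfold Rdiv. split; nra.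
Qed.

Lemma window_freq_add A B : (forall w, A w -> B w -> False) ->
  window_freq (fun w => A w \/ B w) = fun k => window_freq A k + window_freq B k.
Proof.
  intro Hd. apply functional_extensionality; intro k. unfold window_freq.
  rewrite ccount_or, plus_INR by (intros i; apply Hd).
  field. apply Rgt_not_eq, window_length_pos.
Qed.

Lemma empirical_nonneg A : 0 <= empirical A.
Proof. apply (ulim_ge U HU); [apply window_freq_bounded|]. intro k; apply window_freq_bounded. Qed.

Lemma empirical_add A B : (forall w, A w -> B w -> False) ->
  empirical (fun w => A w \/ B w) = empirical A + empirical B.
Proof.
  intro Hd. unfold empirical. rewrite window_freq_add by auto.
  apply (ulim_add U HU); try apply window_freq_bounded.
  rewrite <- window_freq_add by auto. apply window_freq_bounded.
Qed.

Lemma empirical_full : empirical (fun _ => True) = 1.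
Proof.
  unfold empirical. replace (window_freq (fun _ => True)) with (fun _ : nat => 1).
  - apply (ulim_const U HU). lra.
  - apply functional_extensionality; intro k. unfold window_freq. rewrite ccount_true.
    field. apply Rgt_not_eq, window_length_pos.
Qed.

(** Invariance: pulling [A] back by [TTZ] shifts each window by one step,
    which changes the frequency by at most [1 / n k <= 1 / (k+1)]. *)
Lemma empirical_inv A : empirical (fun w => A (TTZ w)) = empirical A.
Proof.
  unfold empirical. apply (ulim_close U HU); try apply window_freq_bounded.
  intros eps Heps. destruct (INR_unbounded (/ eps)) as [m Hmeps].
  apply (uf_mono _ HU) with (fun k => (m <= k)%nat); [|apply HU]. intros k Hk.
  unfold window_freq.
  replace (fun i => A (TTZ (orbZ i))) with (fun i => A (orbZ (S i)))
    by (apply functional_extensionality; intro i; rewrite TTZ_orbZ; auto).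
  rewrite (ccount_shift (fun j => A (orbZ j))).
  destruct (ccount_shift1 (fun i => A (orbZ i)) (a k) (n k)) as [h1 h2].
  apply le_INR in h1; apply le_INR in h2. rewrite plus_INR in h1, h2. simpl INR in h1, h2.
  pose proof (window_length_pos k). specialize (Hn k). apply le_INR in Hn, Hk.
  rewrite S_INR in Hn.
  assert (Hinv : / INR (n k) < eps).
  { rewrite <- (Rinv_inv eps). apply Rinv_lt_contravar; [|lra].
    apply Rmult_lt_0_compat; [apply Rinv_0_lt_compat|]; lra. }
  assert (0 < / INR (n k)) by (apply Rinv_0_lt_compat; lra).
  assert (INR (n k) * / INR (n k) = 1) by (field; lra).
  unfold Rdiv. apply Rabs_def1; nra.
Qed.

Definition far (w : Z) : Prop := ~ gap X d T x y w < e.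

Lemma empirical_far : 1 - lam <= empirical far.
Proof.
  apply (ulim_ge U HU); [apply window_freq_bounded|]. intro k. unfold window_freq.
  pose proof (ccount_compl (fun i => close_times d T x y e i = true) (a k) (n k)) as Hsplit.
  cbv beta in Hsplit.
  replace (fun i => ~ close_times d T x y e i = true) with (fun i => far (orbZ i)) in Hsplit.
  - specialize (Hwin k). rewrite count_in_ccount in Hwin.
    apply (f_equal INR) in Hsplit. rewrite plus_INR in Hsplit. pose proof (window_length_pos k).
    apply Rmult_le_reg_r with (INR (n k)); auto.
    unfold Rdiv. rewrite Rmult_assoc, Rinv_l by lra. lra.
  - apply functional_extensionality; intro i. apply propositional_extensionality.
    unfold far, gap, close_times; simpl. destruct Rlt_dec; split; intro; try tauto; discriminate.
Qed.

(** The regularisation of [empirical] is an invariant Borel probability on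
    [Z] giving positive mass to the closed set [far], so [far] contains a
    point of the support. *)
Hypothesis Hlam : lam < 1.
Hypothesis Hc : compact_space X d.

Lemma far_support_point : exists z : Z, far z /\ supp Z dz (preZ d T x y) z.
Proof.
  pose proof (is_metric_Z X d T Hm x y) as HmZ.
  pose proof (compact_Z X d T Hm x y Hc) as HcZ.
  assert (Hfar_closed : Defs.closed_set Z dz far)
    by apply open_compl_closed, open_gap_lt, Hm.
  assert (Hfar : 0 < mu Z dz empirical far).
  { eapply Rlt_le_trans; [|apply mu_closed_ge; auto].
    - pose proof empirical_far. lra.
    - exact empirical_nonneg.
    - exact empirical_add.
    - exact empirical_full. }
  destruct (support_point_in_full_closed Z dz HmZ HcZ empirical empirical_nonneg empirical_add
              empirical_full far Hfar_closed Hfar) as [z [Hz Hsupp]].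
  exists z; split; auto. intros C HC Hfullmass. apply Hsupp; auto. apply Hfullmass.
  replace (preZ d T x y) with (fun (A : Z -> Prop) w => A (TTZ w))
    by (apply functional_extensionality; intro A; symmetry; apply preZ_TTZ).
  apply regularisation_invariant; auto.
  - exact empirical_nonneg.
  - exact empirical_add.
  - exact empirical_full.
  - apply TTZ_continuous.
  - exact empirical_inv.
Qed.

End EmpiricalMeasure.

Lemma support_diagonal_banach_proximal (X : Type) (d : X -> X -> R) (T : X -> X) (x y : X)
  (Hm : is_metric X d) (Hc : compact_space X d) (Hcont : continuous_map X d T) :
  (forall z : Zsub d T x y, supp (Zsub d T x y) (dZ d T x y) (preZ d T x y) z ->
     fst (proj1_sig z) = snd (proj1_sig z)) ->
  banach_proximal d T x y.
Proof.
  intro Hdiag. apply NNPP; intro nBP.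
  destruct (not_banach_proximal_windows X d T x y nBP)
    as [e [lam [a [n [He [Hlam [Hn Hwin]]]]]]].
  destruct UltrafilterExistence.nat_ultrafilter_exists as [U HU].
  destruct (far_support_point X d T x y Hm Hcont U HU e lam a n Hn Hwin (proj2 Hlam) Hc) as [z [Hfar Hz]].
  apply Hfar. unfold gap. rewrite (Hdiag z Hz), (d_refl X d Hm). exact He.
Qed.

Theorem mainTheorem9 (X : Type) (d : X -> X -> R) (T : X -> X) (x y : X) :
  TDS X d T ->
  (banach_proximal d T x y <->
     (forall z : Zsub d T x y,
        supp (Zsub d T x y) (dZ d T x y) (preZ d T x y) z ->
        fst (proj1_sig z) = snd (proj1_sig z))) /\
  (banach_proximal d T x y <->
     (forall p : X * X, orbit_closure d T x y p ->
        banach_proximal d T (fst p) (snd p))).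
Proof.
  intros [_ [Hm [Hc Hcont]]]. split; split.
  - apply banach_proximal_support_diagonal; auto.
  - apply support_diagonal_banach_proximal; auto.
  - apply banach_proximal_orbit_closure; auto.
  - intro Hall. exact (Hall _ (orbit_closure_orbit X d T Hm x y 0)).
Qed.
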